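(* Let $q_1,\dots,q_k$ be real polynomials, all of the same degree $m\ge1$, with $q_i(x)\to\infty$ as $x\to\infty$; write $a^{(i)}_m>0$ for the leading coefficient of $q_i$ and $c_{i,j}=(a^{(j)}_m/a^{(i)}_m)^{1/m}$. Let $1\le t_1<\dots<t_u\le k$. Then there exist integers $M=M(t_1,\dots,t_u)\ge0$ and $a=a(t_1,\dots,t_u)>0$ with $a\ge M$ such that $$\lim_{r\to\infty}\frac1r\Big|\Big\{1\le n\le r:\ q_{t_1}(n)\in\bigcap_{i=1}^u q_{t_i}(\mathbb N)\Big\}\Big|=\frac{M(t_1,\dots,t_u)}{a(t_1,\dots,t_u)},$$ where for $u=1$, $M=a=1$. Moreover, for $u>1$: (1) If for every $2\le i\le u$ one has $c_{t_i,t_1}=\beta_i/\alpha_i\in\mathbb Q$ with coprime positive integers $\alpha_i,\beta_i$, and there is $x_i\in\mathbb Q$ with $q_{t_i}(y)=q_{t_1}(c_{t_1,t_i}(y-x_i))$ for all $y\in\mathbb R$, then $a(t_1,\dots,t_u)=\mathrm{lcm}(\alpha_2,\dots,\alpha_u)$ and $M(t_1,\dots,t_u)=|(W_2\times\dots\times W_u)\cap V|$, where $W_i=\{0,1,\dots,\alpha_i-1\}\cap\frac{\alpha_i}{\beta_i}(\mathbb Z-x_i)$ and $V=\{(w_2,\dots,w_u): w_i-w_j\in\alpha_j\mathbb N-\alpha_i\mathbb N\ \forall i,j\}$ (i.e. the tuples for which the congruences $n\equiv w_i \pmod{\alpha_i}$, $2\le i\le u$, have a common solution). (2) If $c_{t_i,t_1}\notin\mathbb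 Q$ for some $i$, or $c_{t_i,t_1}\in\mathbb Q$ but for some $2\le i\le u$ no $x_i\in\mathbb Q$ satisfies the identity in (1), then $M(t_1,\dots,t_u)=0$. (3) Let $R$ be such that all $q_i$ are strictly increasing on $[R,\infty)$, put $A_i=q_1^{-1}(q_i(\mathbb N))$ (preimages taken in $[R,\infty)$) and $A=\bigcup_{i=1}^kA_i$. Then $$\lim_{r\to\infty}\frac{|\bigcap_{j=1}^uA_{t_j}\cap[1,r]|}r=c_{t_1,1}\frac{M(t_1,\dots,t_u)}{a(t_1,\dots,t_u)},$$ and $$\lim_{r\to\infty}\frac{|A\cap[1,r]|}r=\sum_{u=1}^k(-1)^{u+1}\sum_{1\le t_1<\dots<t_u\le k}c_{t_1,1}\frac{M(t_1,\dots,t_u)}{a(t_1,\dots,t_u)}=:c\ge1.$$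
   Context: $|\Gamma|$ denotes the cardinality of a finite set $\Gamma$; $\mathbb N$ is the set of positive integers. *)

From Stdlib Require Import Reals Lra Lia ZArith Arith List.
From Stdlib Require Import Classical ClassicalEpsilon.
Import ListNotations.
Open Scope R_scope.

(* Real polynomials as coefficient lists, lowest degree first:
   [a0; a1; ...; am] represents a0 + a1 x + ... + am x^m. *)
Fixpoint peval (p : list R) (x : R) : R :=
  match p with
  | nil => 0
  | a :: p' => a + x * peval p' x
  end.

Definition has_degree (p : list R) (m : nat) : Prop :=
  length p = S m /\ nth m p 0 <> 0.

Definition tends_to_infty (f : R -> R) : Prop :=
  forall B : R, exists X : R, forall x : R, X <= x -> B <= f x.

Definition lead (q : nat -> list R) (m i : nat) : R := nth m (q i) 0.

Definition cc (q : nat -> list R) (m i j : nat) : R :=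
  Rpower (lead q m j / lead q m i) (/ INR m).

Definition is_rat (x : R) : Prop :=
  exists p r : Z, (r <> 0)%Z /\ x = IZR p / IZR r.

Definition dec01 (P : Prop) : nat :=
  if excluded_middle_informative P then 1%nat else 0%nat.

Fixpoint ccount {A : Type} (P : A -> Prop) (l : list A) : nat :=
  match l with
  | nil => 0%nat
  | a :: l' => (dec01 (P a) + ccount P l')%nat
  end.

Definition cnt (P : nat -> Prop) (r : nat) : nat := ccount P (seq 1 r).

Definition valid_tuple (k : nat) (t : list nat) : Prop :=
  t <> nil /\
  (forall j, (S j < length t)%nat -> (nth j t 0 < nth (S j) t 0)%nat) /\
  (forall s, In s t -> (1 <= s <= k)%nat).

(* T t i = t_i (1-based) *)
Definition T (t : list nat) (i : nat) : nat := nth (i - 1) t 0%nat.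

(* n is counted: q_{t_1}(n) lies in q_{t_i}(N) for all 1 <= i <= u (N = positive integers) *)
Definition good (q : nat -> list R) (t : list nat) (n : nat) : Prop :=
  forall i, (1 <= i <= length t)%nat ->
    exists l : nat, (1 <= l)%nat /\ peval (q (T t i)) (INR l) = peval (q (T t 1)) (INR n).

Fixpoint tuples (bs : list nat) : list (list nat) :=
  match bs with
  | nil => [nil]
  | b :: bs' => flat_map (fun w => map (cons w) (tuples bs')) (seq 0 b)
  end.

Definition idx2 (u : nat) : list nat := seq 2 (u - 1).

Definition lcm_list (l : list nat) : nat := fold_right Nat.lcm 1%nat l.

Definition inW (al be : nat) (x : R) (w : nat) : Prop :=
  (w < al)%nat /\ exists z : Z, INR w = INR al / INR be * (IZR z - x).

(* w_i := nth (i-2) ws, for 2 <= i <= u *)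
Definition wcomp (ws : list nat) (i : nat) : nat := nth (i - 2) ws 0%nat.

Definition inV (u : nat) (al : nat -> nat) (ws : list nat) : Prop :=
  forall i j, (2 <= i <= u)%nat -> (2 <= j <= u)%nat ->
    exists a b : nat, (1 <= a)%nat /\ (1 <= b)%nat /\
      (Z.of_nat (wcomp ws i) - Z.of_nat (wcomp ws j)
       = Z.of_nat (al j * a) - Z.of_nat (al i * b))%Z.

Definition Mformula (u : nat) (al be : nat -> nat) (x : nat -> R) : nat :=
  ccount (fun ws => (forall i, (2 <= i <= u)%nat -> inW (al i) (be i) (x i) (wcomp ws i))
                    /\ inV u al ws)
         (tuples (map al (idx2 u))).

Definition shift_id (q : nat -> list R) (m : nat) (t : list nat) (i : nat) (x : R) : Prop :=
  forall y : R, peval (q (T t i)) y = peval (q (T t 1)) (cc q m (T t 1) (T t i) * (y - x)).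

Definition incr_from (q : nat -> list R) (k : nat) (R0 : R) : Prop :=
  forall i, (1 <= i <= k)%nat -> forall x y, R0 <= x -> x < y -> peval (q i) x < peval (q i) y.

Definition Aset (q : nat -> list R) (R0 : R) (i : nat) (z : R) : Prop :=
  R0 <= z /\ exists l : nat, (1 <= l)%nat /\ peval (q 1%nat) z = peval (q i) (INR l).

Definition has_card (S : R -> Prop) (n : nat) : Prop :=
  exists l : list R, NoDup l /\ length l = n /\ forall z, In z l <-> S z.

Fixpoint subseqs (l : list nat) : list (list nat) :=
  match l with
  | nil => [nil]
  | x :: l' => map (cons x) (subseqs l') ++ subseqs l'
  end.

Definition nonempty_subseqs (l : list nat) : list (list nat) :=
  filter (fun t => match t with nil => false | _ => true end) (subseqs l).

Definition Rsum_list (l : list R) : R := fold_right Rplus 0 l.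

(* For two polynomials P, Q of the same degree m with positive leading coefficients, an
   expansion of Q(c z + e) - P(z) in powers of z shows that Q(l) = P(n) forces
   l = c n + d + o(1), where c = (a_P / a_Q)^(1/m) and d is determined by the two leading
   pairs of coefficients.  Hence if c is irrational, two solutions n < n' can never be a
   bounded distance apart, and the solutions have density 0; if c is rational but
   Q(c z + d) <> P(z), the solutions are finite in number; and if Q(c z + x) = P(z) with
   c = beta / alpha, then n is eventually a solution iff c n + x is an integer, a condition
   depending only on n mod alpha.  Intersecting over i, the counted set is eventually
   periodic modulo lcm(alpha_i), and the Chinese remainder theorem identifies its residues
   with the compatible tuples counted by M.
   For part (3), q_1(z) = q_{t_1}(n) is an increasing bijection between the points z of the
   intersection of the A_{t_j} and the counted n, with z = c_{1,t_1} n + O(1); so the density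
   is rescaled by c_{t_1,1}.  The formula for the union is inclusion-exclusion, and c >= 1
   because A contains every integer beyond R. *)

From Stdlib Require Import Reals Lra Lia ZArith Znumtheory Arith List Sorting.
From Stdlib Require Import Classical ClassicalEpsilon.
From mathcomp Require preorder order zify_ssreflect.
Import ListNotations.

Module NatDvdLattice.
Import preorder.Order.NatDvd order.Order.NatDvd.

(* Divisibility makes nat a distributive lattice with meet gcdn and join lcmn. *)
Lemma gcd_lcm_distr_l (a b c : nat) :
  div.gcdn (div.lcmn a b) c = div.lcmn (div.gcdn a c) (div.gcdn b c).
Proof. exact (order.Order.meetUl (a : preorder.Order.NatDvd.t) b c). Qed.

End NatDvdLattice.

Open Scope Z_scope.

Lemma Z_gcd_lcm_distr_l (a b c : Z) : 0 <= a -> 0 <= b -> 0 <= c ->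
  Z.gcd (Z.lcm a b) c = Z.lcm (Z.gcd a c) (Z.gcd b c).
Proof.
  intros Ha Hb Hc.
  rewrite <- (Z2Nat.id a), <- (Z2Nat.id b), <- (Z2Nat.id c) by assumption.
  rewrite <- !zify_ssreflect.SsreflectZifyInstances.Op_gcdn_subproof,
    <- !zify_ssreflect.SsreflectZifyInstances.Op_lcmn_subproof,
    <- zify_ssreflect.SsreflectZifyInstances.Op_gcdn_subproof.
  f_equal. apply NatDvdLattice.gcd_lcm_distr_l.
Qed.

Lemma Z_crt_pair m1 m2 r1 r2 : (Z.gcd m1 m2 | r1 - r2) ->
  exists x, (m1 | x - r1) /\ (m2 | x - r2).
Proof.
  intros [t Ht].
  destruct (Z.gcd_bezout m1 m2 (Z.gcd m1 m2) eq_refl) as [u [v Huv]].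
  exists (r1 - u * m1 * t). split.
  - exists (- u * t). ring.
  - exists (v * t). rewrite <- Huv in Ht. lia.
Qed.

Definition Zlcm_list (l : list Z) : Z := fold_right Z.lcm 1 l.

Lemma Zlcm_list_pos l : (forall a, In a l -> 0 < a) -> 0 < Zlcm_list l.
Proof.
  induction l as [|a l IH]; intros H; [simpl; lia|].
  assert (0 < a) by (apply H; left; auto).
  assert (0 < Zlcm_list l) by (apply IH; intros; apply H; right; auto).
  simpl. fold (Zlcm_list l). pose proof (Z.lcm_nonneg a (Zlcm_list l)).
  destruct (Z.eq_dec (Z.lcm a (Zlcm_list l)) 0) as [E|E]; [|lia].
  apply Z.lcm_eq_0 in E. lia.
Qed.

Lemma Zlcm_list_divide l a : In a l -> (a | Zlcm_list l).
Proof.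
  induction l as [|b l IH]; simpl; [tauto|]. intros [<-|E].
  - apply Z.divide_lcm_l.
  - eapply Z.divide_trans; [apply IH; auto|apply Z.divide_lcm_r].
Qed.

Lemma Zgcd_lcm_list_divide l m y : 0 < m -> (forall a, In a l -> 0 < a) ->
  (forall a, In a l -> (Z.gcd a m | y)) -> (Z.gcd (Zlcm_list l) m | y).
Proof.
  intros Hm; induction l as [|a l IH]; intros Hpos H.
  - change (Z.gcd 1 m | y). rewrite Z.gcd_1_l. apply Z.divide_1_l.
  - unfold Zlcm_list; simpl; fold (Zlcm_list l). rewrite Z_gcd_lcm_distr_l; simpl in *.
    + apply Z.lcm_least; auto.
    + pose proof (Hpos a (or_introl eq_refl)); lia.
    + pose proof (Zlcm_list_pos l (fun b Hb => Hpos b (or_intror Hb))); lia.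
    + lia.
Qed.

Lemma Z_crt_list (l : list (Z * Z)) :
  (forall p, In p l -> 0 < fst p) ->
  (forall p p', In p l -> In p' l -> (Z.gcd (fst p) (fst p') | snd p - snd p')) ->
  exists x, forall p, In p l -> (fst p | x - snd p).
Proof.
  induction l as [|[m r] rest IH]; intros Hpos Hcomp.
  - exists 0. simpl; tauto.
  - destruct IH as [x0 Hx0].
    { intros; apply Hpos; simpl; auto. }
    { intros; apply Hcomp; simpl; auto. }
    assert (Hm : 0 < m) by (apply (Hpos (m, r)); simpl; auto).
    assert (Hrest : forall a, In a (map fst rest) -> 0 < a).
    { intros a Ha. apply in_map_iff in Ha. destruct Ha as [p [<- Hp]]. apply Hpos; simpl; auto. }
    assert (Hg : (Z.gcd (Zlcm_list (map fst rest)) m | x0 - r)).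
    { apply Zgcd_lcm_list_divide; auto.
      intros a Ha. apply in_map_iff in Ha. destruct Ha as [[a' ra] [Ea Hp]]. simpl in Ea; subst a'.
      replace (x0 - r) with ((x0 - ra) + (ra - r)) by ring.
      apply Z.divide_add_r.
      + eapply Z.divide_trans; [apply Z.gcd_divide_l|]. apply (Hx0 (a, ra)); auto.
      + apply (Hcomp (a, ra) (m, r)); simpl; auto. }
    destruct (Z_crt_pair _ m x0 r Hg) as [x [H1 H2]].
    exists x. intros p [<-|Hp]; simpl; auto.
    replace (x - snd p) with ((x - x0) + (x0 - snd p)) by ring.
    apply Z.divide_add_r; [|apply Hx0; auto].
    eapply Z.divide_trans; [|apply H1]. apply Zlcm_list_divide, in_map; auto.
Qed.

Close Scope Z_scope.
Open Scope R_scope.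

Lemma peval_app l1 l2 x : peval (l1 ++ l2) x = peval l1 x + x ^ (length l1) * peval l2 x.
Proof. induction l1; simpl; [ring|rewrite IHl1; ring]. Qed.

(* [lower_order k f] says f(z) = O(z^(k-1)) as z -> oo, i.e. f is negligible against z^k;
   the shift by one makes [lower_order (length l) (peval l)] true for every list [l]. *)
Definition lower_order (k : nat) (f : R -> R) : Prop :=
  exists C, forall z, 1 <= z -> Rabs (f z) * z <= C * z ^ k.

Lemma lower_order_nonneg_const k f : lower_order k f -> exists C, 0 <= C /\ forall z, 1 <= z -> Rabs (f z) * z <= C * z ^ k.
Proof.
  intros [C HC]. exists (Rabs C). split; [apply Rabs_pos|].
  intros z Hz. eapply Rle_trans; [apply HC; auto|].
  apply Rmult_le_compat_r; [apply pow_le; lra| apply Rle_abs].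
Qed.

Lemma lower_order_ext k f g : (forall z, f z = g z) -> lower_order k f -> lower_order k g.
Proof. intros E [C HC]; exists C; intros z Hz; rewrite <- E; auto. Qed.

Lemma lower_order_0 k : lower_order k (fun _ => 0).
Proof. exists 0; intros z Hz. rewrite Rabs_R0; lra. Qed.

Lemma lower_order_plus k f g : lower_order k f -> lower_order k g -> lower_order k (fun z => f z + g z).
Proof.
  intros [C HC] [D HD]; exists (C + D); intros z Hz.
  specialize (HC z Hz); specialize (HD z Hz).
  eapply Rle_trans; [apply Rmult_le_compat_r; [lra|apply Rabs_triang]|]. lra.
Qed.

Lemma lower_order_scal k a f : lower_order k f -> lower_order k (fun z => a * f z).
Proof.
  intros [C HC]; exists (Rabs a * C); intros z Hz.
  rewrite Rabs_mult, Rmult_assoc, Rmult_assoc. apply Rmult_le_compat_l; [apply Rabs_pos|auto].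
Qed.

Lemma lower_order_opp k f : lower_order k f -> lower_order k (fun z => - f z).
Proof. intros H; apply (lower_order_ext k (fun z => -1 * f z)); [intros; ring|apply lower_order_scal; auto]. Qed.

Lemma lower_order_minus k f g : lower_order k f -> lower_order k g -> lower_order k (fun z => f z - g z).
Proof. intros H1 H2; apply (lower_order_ext k (fun z => f z + - g z)); [intros; ring|apply lower_order_plus; auto; apply lower_order_opp; auto]. Qed.

Lemma lower_order_mono k j f : (k <= j)%nat -> lower_order k f -> lower_order j f.
Proof.
  intros Hkj H; destruct (lower_order_nonneg_const _ _ H) as [C [HC0 HC]]; exists C; intros z Hz.
  eapply Rle_trans; [apply HC; auto|]. apply Rmult_le_compat_l; auto. apply Rle_pow; auto.
Qed.

Lemma lower_order_const a : lower_order 1 (fun _ => a).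
Proof. exists (Rabs a); intros z Hz; simpl; lra. Qed.

Lemma lower_order_id : lower_order 2 (fun z => z).
Proof. exists 1; intros z Hz; simpl. rewrite Rabs_right; lra. Qed.

Lemma lower_order_mul k j f g : (1 <= j)%nat -> lower_order k f -> lower_order j g -> lower_order (k + j - 1) (fun z => f z * g z).
Proof.
  intros Hj H1 H2.
  destruct (lower_order_nonneg_const _ _ H1) as [C [HC0 HC]]; destruct (lower_order_nonneg_const _ _ H2) as [D [HD0 HD]].
  exists (C * D); intros z Hz. specialize (HC z Hz); specialize (HD z Hz).
  apply Rmult_le_reg_r with z; [lra|].
  replace (C * D * z ^ (k + j - 1) * z) with ((C * z ^ k) * (D * z ^ j)).
  2:{ assert (E : z ^ (k + j - 1) * z = z ^ k * z ^ j).
      { rewrite <- pow_add. set (n := (k + j - 1)%nat).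
        assert (Hn : (k + j)%nat = S n) by (unfold n; lia). rewrite Hn; simpl; ring. }
      replace (C * D * z ^ (k + j - 1) * z) with (C * D * (z ^ (k + j - 1) * z)) by ring.
      rewrite E; ring. }
  rewrite Rabs_mult.
  replace (Rabs (f z) * Rabs (g z) * z * z) with ((Rabs (f z) * z) * (Rabs (g z) * z)) by ring.
  apply Rmult_le_compat; auto.
  - apply Rmult_le_pos; [apply Rabs_pos|lra].
  - apply Rmult_le_pos; [apply Rabs_pos|lra].
Qed.

Lemma lower_order_peval l : lower_order (length l) (peval l).
Proof.
  induction l as [|a p IH]; simpl.
  - apply lower_order_0.
  - apply lower_order_plus.
    + apply lower_order_mono with 1%nat; [lia|apply lower_order_const].
    + apply (lower_order_ext _ (fun z => peval p z * z)); [intros; ring|].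
      replace (S (length p)) with (length p + 2 - 1)%nat by lia.
      apply lower_order_mul; [lia|auto|apply lower_order_id].
Qed.

Lemma lower_order_affine c e : lower_order 2 (fun z => c * z + e).
Proof.
  apply lower_order_plus; [apply lower_order_scal, lower_order_id|apply lower_order_mono with 1%nat; [lia|apply lower_order_const]].
Qed.

Lemma lower_order_peval_affine l c e : lower_order (length l) (fun z => peval l (c * z + e)).
Proof.
  induction l as [|a p IH]; simpl.
  - apply lower_order_0.
  - apply lower_order_plus.
    + apply lower_order_mono with 1%nat; [lia|apply lower_order_const].
    + replace (S (length p)) with (length p + 2 - 1)%nat by lia.
      apply (lower_order_ext _ (fun z => peval p (c * z + e) * (c * z + e))); [intros; ring|].
      apply lower_order_mul; [lia|auto|apply lower_order_affine].
Qed.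

Lemma lower_order_pow n : lower_order (S n) (fun z => z ^ n).
Proof.
  induction n.
  - apply (lower_order_ext _ (fun _ => 1)); [intros; simpl; ring|apply lower_order_const].
  - replace (S (S n)) with (S n + 2 - 1)%nat by lia.
    apply (lower_order_ext _ (fun z => z ^ n * z)); [intros; simpl; ring|].
    apply lower_order_mul; [lia|auto|apply lower_order_id].
Qed.

Lemma lower_order_monomial n w : lower_order n (fun z => INR n * w * z ^ (n - 1)).
Proof.
  destruct n.
  - apply (lower_order_ext _ (fun _ => 0)); [intros; simpl; ring|apply lower_order_0].
  - apply lower_order_scal. replace (S n - 1)%nat with n by lia. apply lower_order_pow.
Qed.

Definition eventually (P : R -> Prop) : Prop := exists N, forall z, N <= z -> P z.

Lemma eventually_and (P Q : R -> Prop) :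
  eventually P -> eventually Q -> eventually (fun z => P z /\ Q z).
Proof.
  intros [N1 H1] [N2 H2]. exists (Rmax N1 N2). intros z Hz.
  pose proof (Rmax_l N1 N2). pose proof (Rmax_r N1 N2).
  split; [apply H1|apply H2]; lra.
Qed.

Lemma eventually_ge a : eventually (fun z => a <= z).
Proof. exists a. auto. Qed.

Lemma eventually_dominant_pos kappa j g : 0 < kappa -> lower_order j g ->
  eventually (fun z => kappa * z ^ j + g z > 0).
Proof.
  intros Hk H; destruct (lower_order_nonneg_const _ _ H) as [C [HC0 HC]].
  exists (Rmax 1 (C / kappa + 1)). intros z Hz.
  assert (H1 : 1 <= z) by (eapply Rle_trans; [apply Rmax_l|eauto]).
  assert (H2 : C / kappa + 1 <= z) by (eapply Rle_trans; [apply Rmax_r|eauto]).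
  specialize (HC z H1).
  assert (Hzj : 0 < z ^ j) by (apply pow_lt; lra).
  assert (Hkz : kappa * z - C > 0).
  { assert (C / kappa * kappa = C) by (field; lra).
    assert (kappa * z >= kappa * (C / kappa + 1)) by (apply Rle_ge, Rmult_le_compat_l; lra).
    nra. }
  apply Rmult_lt_reg_r with z; [lra|].
  assert (Rabs (g z) >= - g z) by (rewrite <- Rabs_Ropp; apply Rle_ge, Rle_abs).
  assert (z ^ j * (kappa * z - C) > 0) by (apply Rmult_gt_0_compat; lra).
  nra.
Qed.

Lemma eventually_dominant_ge kappa j g : 0 < kappa -> (1 <= j)%nat -> lower_order j g ->
  forall B, eventually (fun z => kappa * z ^ j + g z >= B).
Proof.
  intros Hk Hj H B; destruct (lower_order_nonneg_const _ _ H) as [C [HC0 HC]].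
  exists (Rmax 1 ((Rabs B + C) / kappa + 1)). intros z Hz.
  assert (H1 : 1 <= z) by (eapply Rle_trans; [apply Rmax_l|eauto]).
  assert (H2 : (Rabs B + C) / kappa + 1 <= z) by (eapply Rle_trans; [apply Rmax_r|eauto]).
  specialize (HC z H1).
  assert (Hzj : z <= z ^ j).
  { replace z with (z ^ 1) at 1 by ring. apply Rle_pow; auto. }
  assert (Hkz : kappa * z - C >= Rabs B + kappa).
  { assert ((Rabs B + C) / kappa * kappa = Rabs B + C) by (field; lra).
    assert (kappa * z >= kappa * ((Rabs B + C) / kappa + 1)) by (apply Rle_ge, Rmult_le_compat_l; lra).
    nra. }
  assert (Rabs (g z) >= - g z) by (rewrite <- Rabs_Ropp; apply Rle_ge, Rle_abs).
  assert (HB : Rabs B >= B) by (apply Rle_ge, Rle_abs).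
  assert (Hpos : 0 <= kappa * z - C) by (pose proof (Rabs_pos B); lra).
  assert (z ^ j * (kappa * z - C) >= z * (kappa * z - C)) by (apply Rle_ge, Rmult_le_compat_r; lra).
  (* (kappa z^j + g) z >= z^j (kappa z - C) >= z (kappa z - C) >= z * B *)
  assert ((kappa * z ^ j + g z) * z >= B * z).
  { assert ((kappa * z ^ j + g z) * z >= z ^ j * (kappa * z - C)) by nra.
    assert (z * (kappa * z - C) >= z * B) by (apply Rle_ge, Rmult_le_compat_l; lra).
    nra. }
  apply Rle_ge, Rmult_le_reg_r with z; [lra|]. lra.
Qed.

Lemma firstn_last_decomp (l : list R) m : length l = S m ->
  l = firstn m l ++ [nth m l 0].
Proof.
  revert m; induction l as [|a p IH]; intros m H; simpl in *; [lia|].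
  destruct m; simpl.
  - destruct p; simpl in *; [reflexivity|lia].
  - f_equal. apply IH. lia.
Qed.

Lemma peval_split_last l m : length l = S m -> forall x,
  peval l x = peval (firstn m l) x + nth m l 0 * x ^ m.
Proof.
  intros H x. rewrite (firstn_last_decomp l m H) at 1. rewrite peval_app.
  rewrite length_firstn. replace (Nat.min m (length l)) with m by lia. simpl. ring.
Qed.

Lemma peval_lead l m : has_degree l m ->
  forall x, peval l x = nth m l 0 * x ^ m + peval (firstn m l) x.
Proof. intros [H _] x. rewrite (peval_split_last l m H). ring. Qed.

Lemma lower_order_firstn l m : has_degree l m -> lower_order m (peval (firstn m l)).
Proof.
  intros [H _]. pose proof (lower_order_peval (firstn m l)) as O.
  rewrite length_firstn in O. replace (Nat.min m (length l)) with m in O by lia. exact O.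
Qed.

Lemma peval_lead2 l m : has_degree l m -> (1 <= m)%nat ->
  forall x, peval l x = nth m l 0 * x ^ m + nth (m - 1) l 0 * x ^ (m - 1)
                        + peval (firstn (m - 1) l) x.
Proof.
  intros [H _] Hm x. rewrite (peval_split_last l m H).
  assert (H2 : length (firstn m l) = S (m - 1)).
  { rewrite length_firstn; lia. }
  rewrite (peval_split_last _ _ H2).
  rewrite firstn_firstn. replace (Nat.min (m - 1) m) with (m - 1)%nat by lia.
  rewrite nth_firstn. destruct (Nat.ltb_spec (m - 1) m); [|lia]. ring.
Qed.

Lemma length_firstn_pred l m : has_degree l m -> length (firstn (m - 1) l) = (m - 1)%nat.
Proof. intros [H _]. rewrite length_firstn; lia. Qed.

Lemma lead_coef_pos l m : has_degree l m -> (1 <= m)%nat -> tends_to_infty (peval l) -> 0 < nth m l 0.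
Proof.
  intros Hd Hm Hinf.
  destruct (Rtotal_order (nth m l 0) 0) as [Hlt|[Heq|Hgt]]; auto.
  - exfalso.
    destruct (eventually_dominant_ge (- nth m l 0) m (fun z => - peval (firstn m l) z)) with (B := 0)
      as [N HN]; [lra|auto|apply lower_order_opp, lower_order_firstn; auto|].
    destruct (Hinf 1) as [X HX].
    set (z := Rmax N X).
    specialize (HN z (Rmax_l _ _)). specialize (HX z (Rmax_r _ _)).
    rewrite (peval_lead l m Hd) in HX. lra.
  - destruct Hd as [_ Hn]. contradiction.
Qed.

Fixpoint pabs (l : list R) (y : R) : R :=
  match l with nil => 0 | a :: p => Rabs a + y * pabs p y end.
Fixpoint pabs_deriv (l : list R) (y : R) : R :=
  match l with nil => 0 | a :: p => pabs p y + y * pabs_deriv p y end.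

Lemma pabs_ge0 l y : 0 <= y -> 0 <= pabs l y.
Proof.
  intros Hy; induction l; simpl; [lra|].
  pose proof (Rabs_pos a). pose proof (Rmult_le_pos _ _ Hy IHl). lra.
Qed.

Lemma pabs_deriv_ge0 l y : 0 <= y -> 0 <= pabs_deriv l y.
Proof.
  intros Hy; induction l; simpl; [lra|].
  pose proof (pabs_ge0 l y Hy). pose proof (Rmult_le_pos _ _ Hy IHl). lra.
Qed.

Lemma Rabs_peval_le_pabs l y : 0 <= y -> Rabs (peval l y) <= pabs l y.
Proof.
  intros Hy; induction l; simpl; [rewrite Rabs_R0; lra|].
  eapply Rle_trans; [apply Rabs_triang|]. rewrite Rabs_mult, (Rabs_right y) by lra.
  apply Rplus_le_compat_l. apply Rmult_le_compat_l; auto.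
Qed.

Lemma pabs_le l y y' : 0 <= y -> y <= y' -> pabs l y <= pabs l y'.
Proof.
  intros Hy Hyy; induction l; simpl; [lra|].
  apply Rplus_le_compat_l. apply Rmult_le_compat; auto; [apply pabs_ge0; auto].
Qed.

Lemma peval_lipschitz l x y : 0 <= x -> x <= y ->
  Rabs (peval l y - peval l x) <= (y - x) * pabs_deriv l y.
Proof.
  intros Hx Hxy; induction l as [|a p IH]; simpl.
  - replace (0 - 0) with 0 by ring. rewrite Rabs_R0; lra.
  - replace (a + y * peval p y - (a + x * peval p x)) with
      ((y - x) * peval p y + x * (peval p y - peval p x)) by ring.
    eapply Rle_trans; [apply Rabs_triang|]. rewrite !Rabs_mult.
    rewrite (Rabs_right (y - x)) by lra. rewrite (Rabs_right x) by lra.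
    pose proof (Rabs_peval_le_pabs p y ltac:(lra)).
    assert ((y - x) * Rabs (peval p y) <= (y - x) * pabs p y) by (apply Rmult_le_compat_l; lra).
    assert (x * Rabs (peval p y - peval p x) <= x * ((y - x) * pabs_deriv p y)) by (apply Rmult_le_compat_l; lra).
    pose proof (pabs_deriv_ge0 p y ltac:(lra)).
    assert (x * ((y - x) * pabs_deriv p y) <= y * ((y - x) * pabs_deriv p y)).
    { apply Rmult_le_compat_r; [apply Rmult_le_pos|]; lra. }
    nra.
Qed.

Lemma lower_order_pabs l : lower_order (length l) (pabs l).
Proof.
  induction l as [|a p IH]; simpl.
  - apply lower_order_0.
  - apply lower_order_plus.
    + apply lower_order_mono with 1%nat; [lia|apply lower_order_const].
    + apply (lower_order_ext _ (fun z => pabs p z * z)); [intros; ring|].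
      replace (S (length p)) with (length p + 2 - 1)%nat by lia.
      apply lower_order_mul; [lia|auto|apply lower_order_id].
Qed.

Lemma lower_order_pabs_deriv l : lower_order (length l - 1) (pabs_deriv l).
Proof.
  induction l as [|a p IH]; simpl.
  - apply lower_order_0.
  - destruct p as [|b p'].
    + simpl. apply (lower_order_ext _ (fun _ => 0)); [intros; simpl; ring|apply lower_order_0].
    + apply lower_order_plus.
      * replace (length (b :: p') - 0)%nat with (length (b :: p')) by lia. apply lower_order_pabs.
      * apply (lower_order_ext _ (fun z => pabs_deriv (b :: p') z * z)); [intros; ring|].
        replace (length (b :: p') - 0)%nat with (length (b :: p') - 1 + 2 - 1)%nat by (simpl; lia).
        apply lower_order_mul; [lia|auto|apply lower_order_id].
Qed.

Lemma pow_sub_ge x y m : 0 <= x -> x <= y -> (1 <= m)%nat ->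
  y ^ m - x ^ m >= (y - x) * y ^ (m - 1).
Proof.
  intros Hx Hxy Hm. induction m as [|m IH]; [lia|].
  destruct m.
  - simpl. lra.
  - assert (IH' : y ^ S m - x ^ S m >= (y - x) * y ^ m) by (replace m with (S m - 1)%nat at 3 by lia; apply IH; lia).
    replace (S (S m) - 1)%nat with (S m) by lia.
    assert (0 <= x ^ S m) by (apply pow_le; lra).
    replace (y ^ S (S m) - x ^ S (S m)) with (y * (y ^ S m - x ^ S m) + x ^ S m * (y - x)) by (simpl; ring).
    replace ((y - x) * y ^ S m) with (y * ((y - x) * y ^ m)) by (simpl; ring).
    assert (y * (y ^ S m - x ^ S m) >= y * ((y - x) * y ^ m)) by (apply Rle_ge, Rmult_le_compat_l; lra).
    assert (0 <= x ^ S m * (y - x)) by (apply Rmult_le_pos; lra). lra.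
Qed.

Lemma peval_eventually_increasing l m : has_degree l m -> (1 <= m)%nat -> 0 < nth m l 0 ->
  exists X, 1 <= X /\ forall x y, X <= x -> x < y -> peval l x < peval l y.
Proof.
  intros [Hlen Hn] Hm Ha.
  set (l1 := firstn m l).
  assert (Hl1 : length l1 = m) by (unfold l1; rewrite length_firstn; lia).
  destruct (eventually_dominant_pos (nth m l 0) (m - 1) (fun z => - pabs_deriv l1 z)) as [N HN]; auto.
  { apply lower_order_opp. rewrite <- Hl1. apply lower_order_pabs_deriv. }
  exists (Rmax 1 N). split; [apply Rmax_l|]. intros x y Hx Hxy.
  assert (H1 : 1 <= x) by (eapply Rle_trans; [apply Rmax_l|eauto]).
  assert (HNy : N <= y) by (apply Rle_trans with (Rmax 1 N); [apply Rmax_r|lra]).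
  specialize (HN y HNy).
  rewrite !(peval_split_last l m Hlen). fold l1.
  pose proof (peval_lipschitz l1 x y ltac:(lra) ltac:(lra)) as HL.
  pose proof (pow_sub_ge x y m ltac:(lra) ltac:(lra) Hm) as HP.
  assert (- (peval l1 y - peval l1 x) <= (y - x) * pabs_deriv l1 y).
  { eapply Rle_trans; [|apply HL]. rewrite <- Rabs_Ropp. apply Rle_abs. }
  assert (0 < (y - x) * (nth m l 0 * y ^ (m - 1) + - pabs_deriv l1 y)) by (apply Rmult_lt_0_compat; lra).
  assert (nth m l 0 * (y ^ m - x ^ m) >= nth m l 0 * ((y - x) * y ^ (m - 1))) by (apply Rle_ge, Rmult_le_compat_l; lra).
  lra.
Qed.

Lemma Rabs_peval_le_pabs_bound l X y : 0 <= y -> y <= X -> Rabs (peval l y) <= pabs l X.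
Proof.
  intros H1 H2. eapply Rle_trans; [apply Rabs_peval_le_pabs; auto|apply pabs_le; auto].
Qed.

Definition binom_rem (c e : R) (n : nat) (z : R) : R :=
  (c * z + e) ^ n - c ^ n * z ^ n - INR n * c ^ (n - 1) * e * z ^ (n - 1).

Lemma lower_order_binom_rem c e n : lower_order (n - 1) (binom_rem c e n).
Proof.
  destruct n.
  - apply (lower_order_ext _ (fun _ => 0)); [intros; unfold binom_rem; simpl; ring|apply lower_order_0].
  - induction n.
    + apply (lower_order_ext _ (fun _ => 0)); [intros; unfold binom_rem; simpl; ring|apply lower_order_0].
    + apply (lower_order_ext _ (fun z => binom_rem c e (S n) z * (c * z + e) + INR (S n) * (c ^ n * e ^ 2) * z ^ (S n - 1))).
      { intros z; unfold binom_rem. replace (S (S n) - 1)%nat with (S n) by lia.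
        replace (S n - 1)%nat with n by lia. rewrite !S_INR. simpl. ring. }
      replace (S (S n) - 1)%nat with (S n - 1 + 2 - 1)%nat by lia.
      apply lower_order_plus.
      * apply lower_order_mul; [lia|auto|apply lower_order_affine].
      * replace (S n - 1 + 2 - 1)%nat with (S n) by lia.
        apply (lower_order_ext _ (fun z => INR (S n) * (c ^ n * e ^ 2) * z ^ (S n - 1))); [intros; ring|].
        apply lower_order_monomial.
Qed.

Definition scale (P Q : list R) (m : nat) : R := Rpower (nth m P 0 / nth m Q 0) (/ INR m).

Section ScaleOffset.
Variables (P Q : list R) (m : nat).
Hypotheses (HP : has_degree P m) (HQ : has_degree Q m) (Hm : (1 <= m)%nat)
  (HaP : 0 < nth m P 0) (HaQ : 0 < nth m Q 0).

Let aP := nth m P 0.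
Let aQ := nth m Q 0.
Let bP := nth (m - 1) P 0.
Let bQ := nth (m - 1) Q 0.
Let c := scale P Q m.

Lemma scale_pos : 0 < c.
Proof. unfold c, scale, Rpower. apply exp_pos. Qed.

Lemma scale_pow : aQ * c ^ m = aP.
Proof.
  unfold c, scale. rewrite <- Rpower_pow by (unfold Rpower; apply exp_pos).
  rewrite Rpower_mult. rewrite Rinv_l by (apply not_0_INR; lia).
  rewrite Rpower_1 by (apply Rdiv_lt_0_compat; auto). unfold aP, aQ. field. lra.
Qed.

(* The z^m coefficient of Q(c z + e) - P(z) vanishes, and its z^(m-1) coefficient is
   [offset_weight * (e - offset)]. *)
Definition offset_weight := aQ * INR m * c ^ (m - 1).
Definition offset := (bP - bQ * c ^ (m - 1)) / offset_weight.

Lemma offset_weight_pos : 0 < offset_weight.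
Proof.
  unfold offset_weight. apply Rmult_lt_0_compat; [apply Rmult_lt_0_compat|apply pow_lt, scale_pos]; auto.
  apply lt_0_INR; lia.
Qed.

Lemma lower_order_shift_diff e : lower_order (m - 1)
  (fun z => peval Q (c * z + e) - peval P z - offset_weight * (e - offset) * z ^ (m - 1)).
Proof.
  apply (lower_order_ext _ (fun z => aQ * binom_rem c e m z
      + bQ * (binom_rem c e (m - 1) z + INR (m - 1) * (c ^ (m - 1 - 1) * e) * z ^ (m - 1 - 1))
      + peval (firstn (m - 1) Q) (c * z + e) - peval (firstn (m - 1) P) z)).
  { intros z. rewrite (peval_lead2 Q m HQ Hm), (peval_lead2 P m HP Hm).
    fold aP aQ bP bQ. rewrite <- scale_pow.
    assert (E : offset_weight * (e - offset) = aQ * INR m * c ^ (m - 1) * e - (bP - bQ * c ^ (m - 1))).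
    { unfold offset. pose proof offset_weight_pos. field_simplify; [|lra]. unfold offset_weight. ring. }
    rewrite E. unfold binom_rem. ring. }
  apply lower_order_minus.
  - apply lower_order_plus; [apply lower_order_plus|].
    + apply lower_order_scal. apply lower_order_binom_rem.
    + apply lower_order_scal. apply lower_order_plus.
      * apply lower_order_mono with (m - 1 - 1)%nat; [lia|apply lower_order_binom_rem].
      * apply lower_order_monomial.
    + rewrite <- (length_firstn_pred Q m HQ) at 1. apply lower_order_peval_affine.
  - rewrite <- (length_firstn_pred P m HP) at 1. apply lower_order_peval.
Qed.

Lemma shift_diff_eventually_pos e : offset < e ->
  eventually (fun z => peval Q (c * z + e) - peval P z > 0).
Proof.
  intros He.
  assert (Hk : 0 < offset_weight * (e - offset)) by (apply Rmult_lt_0_compat; [apply offset_weight_pos|lra]).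
  destruct (eventually_dominant_pos _ (m - 1) _ Hk (lower_order_shift_diff e)) as [N HN].
  exists N; intros z Hz; specialize (HN z Hz). lra.
Qed.

Lemma shift_diff_eventually_neg e : e < offset ->
  eventually (fun z => peval Q (c * z + e) - peval P z < 0).
Proof.
  intros He.
  assert (Hk : 0 < offset_weight * (offset - e)) by (apply Rmult_lt_0_compat; [apply offset_weight_pos|lra]).
  destruct (eventually_dominant_pos _ (m - 1) _ Hk (lower_order_opp _ _ (lower_order_shift_diff e))) as [N HN].
  exists N; intros z Hz; specialize (HN z Hz). lra.
Qed.

Lemma exact_shift_unique e : (forall z, peval Q (c * z + e) = peval P z) -> e = offset.
Proof.
  intros H. destruct (Rtotal_order e offset) as [Hl|[He|Hg]]; auto.
  - destruct (shift_diff_eventually_neg e Hl) as [N HN]. specialize (HN N (Rle_refl _)). rewrite H in HN. lra.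
  - destruct (shift_diff_eventually_pos e Hg) as [N HN]. specialize (HN N (Rle_refl _)). rewrite H in HN. lra.
Qed.

Lemma peval_unbounded (L : list R) : has_degree L m -> 0 < nth m L 0 ->
  forall B, eventually (fun z => peval L z >= B).
Proof.
  intros HL Ha B.
  destruct (eventually_dominant_ge (nth m L 0) m _ Ha Hm (lower_order_firstn L m HL) B) as [N HN].
  exists N; intros z Hz. rewrite (peval_lead L m HL). apply HN; auto.
Qed.

Lemma solution_near_line delta : 0 < delta -> eventually (fun n => forall l, 1 <= l ->
  peval Q l = peval P n -> Rabs (l - c * n - offset) < delta).
Proof.
  intros Hd.
  destruct (peval_eventually_increasing Q m HQ Hm HaQ) as [X [HX1 HX]].
  pose proof scale_pos as Hc.
  destruct (eventually_and _ _ (peval_unbounded P HP HaP (pabs Q X + 1))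
             (eventually_and _ _ (shift_diff_eventually_pos (offset + delta) ltac:(lra))
               (eventually_and _ _ (shift_diff_eventually_neg (offset - delta) ltac:(lra))
                 (eventually_ge ((X + Rabs offset + delta) / c))))) as [N HN].
  exists N. intros n Hn l Hl HQP. destruct (HN n Hn) as [H1 [H2 [H3 H4]]].
  assert (HcN : c * n >= X + Rabs offset + delta).
  { apply Rmult_le_compat_l with (r := c) in H4; [|lra].
    replace (c * ((X + Rabs offset + delta) / c)) with (X + Rabs offset + delta) in H4 by (field; lra).
    lra. }
  pose proof (Rle_abs offset). pose proof (Rle_abs (- offset)). rewrite Rabs_Ropp in *.
  assert (HlX : X < l).
  { destruct (Rlt_or_le X l) as [h|h]; auto. exfalso.
    pose proof (Rabs_peval_le_pabs_bound Q X l ltac:(lra) h) as Hb. rewrite HQP in Hb.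
    pose proof (Rle_abs (peval P n)). lra. }
  (* Q is increasing beyond X, so l lies between the points c n + offset -/+ delta where
     Q(c z + e) - P(z) has opposite signs. *)
  apply Rabs_def1.
  - destruct (Rlt_or_le (l - c * n - offset) delta) as [h|h]; auto. exfalso.
    destruct (Req_dec l (c * n + (offset + delta))) as [E|E].
    + rewrite E in HQP. lra.
    + pose proof (HX (c * n + (offset + delta)) l ltac:(lra) ltac:(lra)). lra.
  - destruct (Rlt_or_le (- delta) (l - c * n - offset)) as [h|h]; auto. exfalso.
    destruct (Req_dec l (c * n + (offset - delta))) as [E|E].
    + rewrite E in HQP. lra.
    + pose proof (HX l (c * n + (offset - delta)) ltac:(lra) ltac:(lra)). lra.
Qed.

End ScaleOffset.

Fixpoint padd (l1 l2 : list R) : list R :=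
  match l1, l2 with
  | nil, _ => l2
  | _, nil => l1
  | a :: p, b :: q => (a + b) :: padd p q
  end.

Lemma peval_padd l1 l2 z : peval (padd l1 l2) z = peval l1 z + peval l2 z.
Proof.
  revert l2; induction l1 as [|a p IH]; intros [|b q]; simpl; try ring.
  rewrite IH; ring.
Qed.

Lemma peval_scal a l z : peval (map (Rmult a) l) z = a * peval l z.
Proof. induction l; simpl; [ring|rewrite IHl; ring]. Qed.

Lemma peval_affine_poly l c e : exists l', forall z, peval l (c * z + e) = peval l' z.
Proof.
  induction l as [|a p [p' IH]].
  - exists nil; intros; reflexivity.
  - exists (padd [a] (padd (0 :: map (Rmult c) p') (map (Rmult e) p'))).
    intros z. rewrite !peval_padd. simpl. rewrite !peval_scal, IH. ring.
Qed.

Lemma peval_zero_or_eventually_nonzero l :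
  (forall z, peval l z = 0) \/ eventually (fun z => peval l z <> 0).
Proof.
  induction l as [|a l IH] using rev_ind.
  - left; intros; reflexivity.
  - destruct (Rtotal_order a 0) as [Ha|[Ha|Ha]].
    + right.
      destruct (eventually_dominant_pos (- a) (length l) (fun z => - peval l z) ltac:(lra) (lower_order_opp _ _ (lower_order_peval l))) as [N HN].
      exists N; intros z Hz. specialize (HN z Hz). rewrite peval_app. simpl. lra.
    + subst. destruct IH as [IH|[N IH]].
      * left; intros z; rewrite peval_app, IH; simpl; ring.
      * right; exists N; intros z Hz. rewrite peval_app; simpl.
        replace (peval l z + z ^ length l * (0 + z * 0)) with (peval l z) by ring. auto.
    + right.
      destruct (eventually_dominant_pos a (length l) (peval l) Ha (lower_order_peval l)) as [N HN].
      exists N; intros z Hz. specialize (HN z Hz). rewrite peval_app. simpl. lra.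
Qed.

Lemma shift_exact_or_eventually_ne P Q c e :
  (forall z, peval Q (c * z + e) = peval P z) \/
  eventually (fun z => peval Q (c * z + e) <> peval P z).
Proof.
  destruct (peval_affine_poly Q c e) as [l' Hl'].
  destruct (peval_zero_or_eventually_nonzero (padd l' (map (Rmult (-1)) P))) as [H|[N H]].
  - left; intros z. specialize (H z). rewrite peval_padd, peval_scal, <- Hl' in H. lra.
  - right; exists N; intros z Hz E. apply (H z Hz). rewrite peval_padd, peval_scal, <- Hl', E. ring.
Qed.

Lemma continuity_peval l : continuity (peval l).
Proof.
  induction l as [|a p IH]; simpl.
  - apply continuity_const. intros x y; reflexivity.
  - apply continuity_plus.
    + apply continuity_const. intros x y; reflexivity.
    + apply continuity_mult; auto. apply derivable_continuous, derivable_id.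
Qed.

Lemma dec01_true (P : Prop) : P -> dec01 P = 1%nat.
Proof. intros H; unfold dec01; destruct (excluded_middle_informative P); tauto. Qed.
Lemma dec01_false (P : Prop) : ~ P -> dec01 P = 0%nat.
Proof. intros H; unfold dec01; destruct (excluded_middle_informative P); tauto. Qed.
Lemma dec01_le1 P : (dec01 P <= 1)%nat.
Proof. unfold dec01; destruct (excluded_middle_informative P); lia. Qed.
Lemma dec01_mono (P P' : Prop) : (P -> P') -> (dec01 P <= dec01 P')%nat.
Proof. intros H; unfold dec01; destruct (excluded_middle_informative P); destruct (excluded_middle_informative P'); tauto || lia. Qed.
Lemma dec01_iff (P P' : Prop) : (P <-> P') -> dec01 P = dec01 P'.
Proof. intros H; apply Nat.le_antisymm; apply dec01_mono; tauto. Qed.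

Lemma ccount_app {A} (P : A -> Prop) l1 l2 : ccount P (l1 ++ l2) = (ccount P l1 + ccount P l2)%nat.
Proof. induction l1; simpl; lia. Qed.

Lemma ccount_le_length {A} (P : A -> Prop) l : (ccount P l <= length l)%nat.
Proof. induction l; simpl; [lia|]. pose proof (dec01_le1 (P a)). lia. Qed.

Lemma ccount_mono {A} (P P' : A -> Prop) l : (forall x, In x l -> P x -> P' x) -> (ccount P l <= ccount P' l)%nat.
Proof.
  induction l; simpl; intros H; [lia|].
  pose proof (dec01_mono (P a) (P' a) (H a (or_introl eq_refl))).
  assert (ccount P l <= ccount P' l)%nat by (apply IHl; intros; apply H; auto). lia.
Qed.

Lemma ccount_ext {A} (P P' : A -> Prop) l : (forall x, In x l -> (P x <-> P' x)) -> ccount P l = ccount P' l.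
Proof.
  intros H; apply Nat.le_antisymm; apply ccount_mono; intros x Hx; apply H; auto.
Qed.

Lemma ccount_zero {A} (P : A -> Prop) l : (forall x, In x l -> ~ P x) -> ccount P l = 0%nat.
Proof.
  induction l; simpl; intros H; auto. rewrite dec01_false by (apply H; auto). rewrite IHl; auto.
Qed.

Lemma ccount_all {A} (P : A -> Prop) l : (forall x, In x l -> P x) -> ccount P l = length l.
Proof.
  induction l; simpl; intros H; auto. rewrite dec01_true by (apply H; auto). rewrite IHl; auto.
Qed.

Lemma cnt_add P a b : cnt P (a + b) = (cnt P a + ccount P (seq (S a) b))%nat.
Proof. unfold cnt. rewrite seq_app, ccount_app. reflexivity. Qed.

Lemma cnt_S P r : cnt P (S r) = (cnt P r + dec01 (P (S r)))%nat.
Proof. replace (S r) with (r + 1)%nat by lia. rewrite cnt_add. simpl.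
  replace (r + 1)%nat with (S r) by lia. lia. Qed.

Lemma cnt_le P r : (cnt P r <= r)%nat.
Proof. unfold cnt. pose proof (ccount_le_length P (seq 1 r)). rewrite length_seq in H. auto. Qed.

Lemma cnt_mono P P' r : (forall n, P n -> P' n) -> (cnt P r <= cnt P' r)%nat.
Proof. intros H; apply ccount_mono; auto. Qed.

Lemma cnt_le_eventually_iff P P' N : (forall n, (N <= n)%nat -> (P n <-> P' n)) ->
  forall r, (cnt P r <= cnt P' r + N)%nat.
Proof.
  intros H r; induction r.
  - unfold cnt; simpl; lia.
  - rewrite !cnt_S. destruct (le_lt_dec N (S r)) as [h|h].
    + rewrite (dec01_iff _ _ (H _ h)). lia.
    + pose proof (cnt_le P (S r)). rewrite cnt_S in H0. lia.
Qed.

(* [y r = rho r + o(r)]; unlike convergence of [y r / r], this form is directly stable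
   under bounded perturbations and linear reindexing of [r]. *)
Definition asymp_linear (y : nat -> R) (rho : R) : Prop :=
  forall eps, 0 < eps -> exists K, forall r, Rabs (y r - rho * INR r) <= eps * INR r + K.

Lemma nat_above x : exists N : nat, x < INR N.
Proof.
  destruct (archimed (Rabs x)) as [H1 _].
  exists (Z.to_nat (up (Rabs x))).
  rewrite INR_IZR_INZ, Z2Nat.id.
  - pose proof (Rle_abs x); lra.
  - apply le_IZR. pose proof (Rabs_pos x). lra.
Qed.

Lemma asymp_linear_cv y rho : asymp_linear y rho -> Un_cv (fun r => y r / INR r) rho.
Proof.
  intros H eps Heps.
  destruct (H (eps / 2) ltac:(lra)) as [K HK].
  destruct (nat_above (2 * Rabs K / eps)) as [N HN].
  exists (S N). intros n Hn. unfold R_dist.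
  assert (Hn0 : 0 < INR n) by (apply lt_0_INR; lia).
  assert (HnN : INR N < INR n) by (apply lt_INR; lia).
  replace (y n / INR n - rho) with ((y n - rho * INR n) / INR n) by (field; lra).
  unfold Rdiv; rewrite Rabs_mult, Rabs_inv, (Rabs_right (INR n)) by lra. fold (Rabs (y n - rho * INR n) / INR n).
  apply Rmult_lt_reg_r with (INR n); [lra|].
  unfold Rdiv. rewrite Rmult_assoc, Rinv_l, Rmult_1_r by lra.
  specialize (HK n).
  assert (2 * Rabs K / eps * eps = 2 * Rabs K) by (field; lra).
  assert (2 * Rabs K < eps * INR n).
  { assert (2 * Rabs K / eps * eps < INR n * eps) by (apply Rmult_lt_compat_r; lra). lra. }
  pose proof (Rle_abs K). lra.
Qed.

Lemma cv_asymp_linear y rho : Un_cv (fun r => y r / INR r) rho -> asymp_linear y rho.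
Proof.
  intros H eps Heps.
  destruct (H eps Heps) as [N HN].
  set (K := fold_right Rplus 0 (map (fun r => Rabs (y r - rho * INR r)) (seq 0 (S N)))).
  assert (HK0 : forall r, (r <= N)%nat -> Rabs (y r - rho * INR r) <= K).
  { intros r Hr. unfold K.
    assert (Hin : In r (seq 0 (S N))) by (apply in_seq; lia).
    generalize (seq 0 (S N)) Hin. induction l; simpl; [tauto|].
    assert (forall l, 0 <= fold_right Rplus 0 (map (fun r => Rabs (y r - rho * INR r)) l)).
    { induction l0; simpl; [lra|]. pose proof (Rabs_pos (y a0 - rho * INR a0)). lra. }
    intros [E|E]; [subst; specialize (H0 l); lra|]. specialize (IHl E).
    pose proof (Rabs_pos (y a - rho * INR a)). lra. }
  exists K. intros r.
  destruct (le_lt_dec r N) as [h|h].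
  - pose proof (HK0 r h). pose proof (pos_INR r). assert (0 <= eps * INR r) by (apply Rmult_le_pos; lra). lra.
  - assert (h' : (r >= N)%nat) by lia. specialize (HN r h'). unfold R_dist in HN.
    assert (Hr : 0 < INR r) by (apply lt_0_INR; lia).
    replace (y r - rho * INR r) with ((y r / INR r - rho) * INR r) by (field; lra).
    rewrite Rabs_mult, (Rabs_right (INR r)) by lra.
    assert (0 <= K) by (pose proof (HK0 0%nat ltac:(lia)); pose proof (Rabs_pos (y 0%nat - rho * INR 0)); lra).
    assert (Rabs (y r / INR r - rho) * INR r <= eps * INR r) by (apply Rmult_le_compat_r; lra). lra.
Qed.

Lemma asymp_linear_bounded_diff y y' rho B : (forall r, Rabs (y r - y' r) <= B) -> asymp_linear y rho -> asymp_linear y' rho.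
Proof.
  intros HB H eps Heps. destruct (H eps Heps) as [K HK]. exists (K + B). intros r.
  specialize (HK r); specialize (HB r).
  replace (y' r - rho * INR r) with ((y r - rho * INR r) - (y r - y' r)) by ring.
  eapply Rle_trans; [apply Rabs_triang|]. rewrite Rabs_Ropp. lra.
Qed.

Lemma asymp_linear_plus y1 y2 r1 r2 : asymp_linear y1 r1 -> asymp_linear y2 r2 -> asymp_linear (fun r => y1 r + y2 r) (r1 + r2).
Proof.
  intros H1 H2 eps Heps.
  destruct (H1 (eps/2) ltac:(lra)) as [K1 HK1]; destruct (H2 (eps/2) ltac:(lra)) as [K2 HK2].
  exists (K1 + K2); intros r. specialize (HK1 r); specialize (HK2 r).
  replace (y1 r + y2 r - (r1 + r2) * INR r) with ((y1 r - r1 * INR r) + (y2 r - r2 * INR r)) by ring.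
  eapply Rle_trans; [apply Rabs_triang|]. lra.
Qed.

Lemma asymp_linear_scal a y rho : asymp_linear y rho -> asymp_linear (fun r => a * y r) (a * rho).
Proof.
  intros H eps Heps.
  destruct (H (eps / (Rabs a + 1))) as [K HK].
  { apply Rdiv_lt_0_compat; [lra|pose proof (Rabs_pos a); lra]. }
  exists (Rabs a * Rabs K). intros r. specialize (HK r).
  replace (a * y r - a * rho * INR r) with (a * (y r - rho * INR r)) by ring.
  rewrite Rabs_mult. pose proof (Rabs_pos a). pose proof (pos_INR r).
  assert (Rabs a * Rabs (y r - rho * INR r) <= Rabs a * (eps / (Rabs a + 1) * INR r + K)) by (apply Rmult_le_compat_l; lra).
  assert (Rabs a * (eps / (Rabs a + 1) * INR r) <= eps * INR r).
  { replace (Rabs a * (eps / (Rabs a + 1) * INR r)) with ((Rabs a / (Rabs a + 1)) * (eps * INR r)) by (field; lra).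
    assert (Rabs a / (Rabs a + 1) <= 1) by (apply Rmult_le_reg_r with (Rabs a + 1); [lra|]; unfold Rdiv; rewrite Rmult_assoc, Rinv_l; lra).
    assert (0 <= eps * INR r) by (apply Rmult_le_pos; lra).
    assert (0 <= Rabs a / (Rabs a + 1)) by (apply Rmult_le_pos; [lra|left; apply Rinv_0_lt_compat; lra]).
    nra. }
  pose proof (Rle_abs K).
  assert (Rabs a * K <= Rabs a * Rabs K) by (apply Rmult_le_compat_l; lra). lra.
Qed.

Lemma asymp_linear_comp y rho (s : nat -> nat) lam B : 0 <= lam ->
  (forall r, Rabs (INR (s r) - lam * INR r) <= B) -> asymp_linear y rho ->
  asymp_linear (fun r => y (s r)) (lam * rho).
Proof.
  intros Hlam Hs H eps Heps.
  destruct (H (eps / (lam + 1))) as [K HK]; [apply Rdiv_lt_0_compat; lra|].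
  exists (eps / (lam + 1) * Rabs B + Rabs K + Rabs rho * Rabs B). intros r.
  specialize (HK (s r)). specialize (Hs r).
  replace (y (s r) - lam * rho * INR r) with ((y (s r) - rho * INR (s r)) + rho * (INR (s r) - lam * INR r)) by ring.
  eapply Rle_trans; [apply Rabs_triang|]. rewrite Rabs_mult.
  assert (Rabs rho * Rabs (INR (s r) - lam * INR r) <= Rabs rho * Rabs B).
  { apply Rmult_le_compat_l; [apply Rabs_pos|]. eapply Rle_trans; [apply Hs|apply Rle_abs]. }
  assert (INR (s r) <= lam * INR r + Rabs B).
  { pose proof (Rle_abs (INR (s r) - lam * INR r)). pose proof (Rle_abs B). lra. }
  assert (Hep : 0 < eps / (lam + 1)) by (apply Rdiv_lt_0_compat; lra).
  assert (eps / (lam + 1) * INR (s r) <= eps / (lam + 1) * (lam * INR r + Rabs B)) by (apply Rmult_le_compat_l; lra).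
  assert (eps / (lam + 1) * (lam * INR r) <= eps * INR r).
  { replace (eps / (lam + 1) * (lam * INR r)) with ((lam / (lam + 1)) * (eps * INR r)) by (field; lra).
    assert (lam / (lam + 1) <= 1) by (apply Rmult_le_reg_r with (lam + 1); [lra|]; unfold Rdiv; rewrite Rmult_assoc, Rinv_l; lra).
    pose proof (pos_INR r). assert (0 <= eps * INR r) by (apply Rmult_le_pos; lra).
    assert (0 <= lam / (lam + 1)) by (apply Rmult_le_pos; [lra|left; apply Rinv_0_lt_compat; lra]). nra. }
  pose proof (Rle_abs K). lra.
Qed.

Lemma cv_ratio_ge_1 (y : nat -> R) A c :
  (forall r, INR r - A <= y r) -> Un_cv (fun r => y r / INR r) c -> 1 <= c.
Proof.
  intros Hy Hc.
  apply Rle_cv_lim with (Un := fun r => (INR r - A) / INR r) (Vn := fun r => y r / INR r); auto.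
  - intros r. unfold Rdiv. destruct (Req_dec (INR r) 0) as [E|E].
    + rewrite E, Rinv_0, !Rmult_0_r. lra.
    + apply Rmult_le_compat_r; auto. left. apply Rinv_0_lt_compat. pose proof (pos_INR r). lra.
  - apply asymp_linear_cv. intros eps Heps. exists (Rabs A). intros r.
    replace (INR r - A - 1 * INR r) with (- A) by ring. rewrite Rabs_Ropp.
    pose proof (pos_INR r). assert (0 <= eps * INR r) by (apply Rmult_le_pos; lra). lra.
Qed.

Definition density (P : nat -> Prop) (rho : R) : Prop := asymp_linear (fun r => INR (cnt P r)) rho.

Lemma density_eventually_iff P P' rho N : (forall n, (N <= n)%nat -> (P n <-> P' n)) -> density P rho -> density P' rho.
Proof.
  intros H D. apply asymp_linear_bounded_diff with (y := fun r => INR (cnt P r)) (B := INR N); auto.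
  intros r. pose proof (cnt_le_eventually_iff P P' N H r).
  assert (H' : forall n, (N <= n)%nat -> (P' n <-> P n)) by (intros; split; apply H; auto).
  pose proof (cnt_le_eventually_iff P' P N H' r).
  apply le_INR in H0. rewrite plus_INR in H0. apply le_INR in H1. rewrite plus_INR in H1.
  apply Rabs_le. split; lra.
Qed.

Lemma density_all P : (forall n, (1 <= n)%nat -> P n) -> density P 1.
Proof.
  intros H eps Heps. exists 0. intros r.
  unfold cnt. rewrite ccount_all.
  - rewrite length_seq. replace (INR r - 1 * INR r) with 0 by ring. rewrite Rabs_R0.
    pose proof (pos_INR r). assert (0 <= eps * INR r) by (apply Rmult_le_pos; lra). lra.
  - intros x Hx. apply in_seq in Hx. apply H. lia.
Qed.

Lemma density0_sub P P' : (forall n, P n -> P' n) -> density P' 0 -> density P 0.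
Proof.
  intros H D eps Heps. destruct (D eps Heps) as [K HK]. exists K. intros r. specialize (HK r).
  pose proof (cnt_mono P P' r H). apply le_INR in H0.
  rewrite Rmult_0_l, Rminus_0_r in *. rewrite Rabs_right in * by (apply Rle_ge, pos_INR). lra.
Qed.

Section Periodic.
Variables (P : nat -> Prop) (Pmod : nat -> Prop) (L : nat).
Hypotheses (HL : (0 < L)%nat) (HP : forall n, P n <-> Pmod (n mod L)).
Let w := ccount Pmod (seq 0 L).

Lemma ccount_period_window a : ccount P (seq a L) = w.
Proof.
  induction a.
  - unfold w. apply ccount_ext. intros x Hx. apply in_seq in Hx. rewrite HP, Nat.mod_small by lia. tauto.
  - rewrite <- IHa. destruct L as [|L']; [lia|].
    rewrite seq_S, ccount_app. simpl. rewrite (dec01_iff (P (S (a + L'))) (P a)).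
    + lia.
    + rewrite !HP. replace (S (a + L')) with (a + 1 * S L')%nat by lia. rewrite Nat.Div0.mod_add. tauto.
Qed.

Lemma cnt_mul_period k : cnt P (k * L) = (k * w)%nat.
Proof.
  induction k; [unfold cnt; simpl; lia|].
  replace (S k * L)%nat with (k * L + L)%nat by lia. rewrite cnt_add, IHk, ccount_period_window. lia.
Qed.

Lemma density_periodic : density P (INR w / INR L).
Proof.
  intros eps Heps. exists (2 * INR L). intros r.
  pose proof (Nat.div_mod_eq r L) as Er.
  set (k := (r / L)%nat) in *. set (s := (r mod L)%nat) in *.
  assert (Hs : (s < L)%nat) by (apply Nat.mod_upper_bound; lia).
  assert (Hc : cnt P r = (k * w + ccount P (seq (S (k * L)) s))%nat).
  { rewrite Er. replace (L * k + s)%nat with (k * L + s)%nat by lia. rewrite cnt_add, cnt_mul_period. reflexivity. }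
  pose proof (ccount_le_length P (seq (S (k * L)) s)) as He. rewrite length_seq in He.
  assert (Hw : (w <= L)%nat) by (unfold w; pose proof (ccount_le_length Pmod (seq 0 L)); rewrite length_seq in H; auto).
  set (e := ccount P (seq (S (k * L)) s)) in *.
  rewrite Hc, Er. rewrite plus_INR, !mult_INR, plus_INR, mult_INR.
  assert (HL' : 0 < INR L) by (apply lt_0_INR; lia).
  replace (INR k * INR w + INR e - INR w / INR L * (INR L * INR k + INR s)) with (INR e - INR w * (INR s / INR L)) by (field; lra).
  apply le_INR in He. apply le_INR in Hw. apply lt_INR in Hs.
  assert (0 <= INR s / INR L <= 1).
  { split; [apply Rmult_le_pos; [apply pos_INR|left; apply Rinv_0_lt_compat; lra]|].
    apply Rmult_le_reg_r with (INR L); auto. unfold Rdiv. rewrite Rmult_assoc, Rinv_l; lra. }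
  pose proof (pos_INR e). pose proof (pos_INR w). pose proof (pos_INR (L * k + s)).
  assert (0 <= eps * INR (L * k + s)) by (apply Rmult_le_pos; lra).
  assert (0 <= INR w * (INR s / INR L) <= INR w) by (split; [apply Rmult_le_pos; lra|]; nra).
  assert (0 <= eps * (INR L * INR k + INR s)) by (apply Rmult_le_pos; [lra | pose proof (pos_INR L); pose proof (pos_INR k); pose proof (pos_INR s); nra]).
  apply Rabs_le; split; lra.
Qed.
End Periodic.

Definition spaced (P : nat -> Prop) (H N : nat) : Prop :=
  forall n n', (N <= n)%nat -> (n < n')%nat -> (n' <= n + H)%nat -> P n -> P n' -> False.

Lemma cnt_spaced_le P H N : spaced P H N ->
  forall r, INR (cnt P r) <= INR (N + H + 1) + INR r / INR (S H).
Proof.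
  intros HN r. induction r as [r IH] using (well_founded_induction Wf_nat.lt_wf).
  assert (HSH : 0 < INR (S H)) by (apply lt_0_INR; lia).
  assert (0 <= INR r / INR (S H)) by (apply Rmult_le_pos; [apply pos_INR|left; apply Rinv_0_lt_compat; lra]).
  destruct (le_lt_dec r (N + H + 1)) as [h|h].
  - pose proof (cnt_le P r) as Hcl. apply le_INR in Hcl. apply le_INR in h. lra.
  - destruct r as [|r']; [lia|].
    destruct (classic (P (S r'))) as [Pr|Pr].
    + assert (Ecnt : cnt P (S r') = (cnt P (S r' - S H) + 1)%nat).
      { pose proof (cnt_add P (S r' - S H) (S H)) as E.
        replace (S r' - S H + S H)%nat with (S r') in E by lia. rewrite E. f_equal.
        replace (S (S r' - S H)) with (S r' - H)%nat by lia.
        rewrite seq_S, ccount_app, ccount_zero.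
        2:{ intros x Hx Px. apply in_seq in Hx. apply (HN x (S r')); auto; lia. }
        cbn [ccount]. replace (S r' - H + H)%nat with (S r') by lia.
        rewrite dec01_true by auto. reflexivity. }
      rewrite Ecnt. specialize (IH (S r' - S H)%nat ltac:(lia)).
      rewrite !plus_INR. rewrite !plus_INR, minus_INR in IH by lia.
      replace ((INR (S r') - INR (S H)) / INR (S H)) with (INR (S r') / INR (S H) - 1) in IH by (field; lra).
      simpl (INR 1) in *. lra.
    + rewrite cnt_S, dec01_false by auto.
      specialize (IH r' ltac:(lia)).
      assert (INR r' / INR (S H) <= INR (S r') / INR (S H)).
      { apply Rmult_le_compat_r; [left; apply Rinv_0_lt_compat; lra|apply le_INR; lia]. }
      rewrite Nat.add_0_r. lra.
Qed.

Lemma density0_spaced P : (forall H, (1 <= H)%nat -> exists N, spaced P H N) -> density P 0.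
Proof.
  intros Hsp eps Heps.
  destruct (nat_above (1 / eps)) as [H0 HH0].
  destruct (Hsp (S H0) ltac:(lia)) as [N HN].
  exists (INR (N + S H0 + 1)). intros r.
  rewrite Rmult_0_l, Rminus_0_r, Rabs_right by (apply Rle_ge, pos_INR).
  eapply Rle_trans; [apply (cnt_spaced_le P _ N HN)|].
  assert (HSH : 0 < INR (S (S H0))) by (apply lt_0_INR; lia).
  assert (1 < eps * INR (S (S H0))).
  { assert (E : eps * (1 / eps) = 1) by (field; lra).
    assert (eps * (1 / eps) < eps * INR (S (S H0))) by (apply Rmult_lt_compat_l; [lra|rewrite !S_INR; lra]).
    lra. }
  assert (INR r / INR (S (S H0)) <= eps * INR r).
  { pose proof (pos_INR r).
    apply Rmult_le_reg_r with (INR (S (S H0))); auto. unfold Rdiv. rewrite Rmult_assoc, Rinv_l by lra.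
    nra. }
  lra.
Qed.

Close Scope R_scope.

Lemma In_tuples bs ws : In ws (tuples bs) <->
  length ws = length bs /\ forall j, (j < length bs)%nat -> (nth j ws 0 < nth j bs 0)%nat.
Proof.
  revert ws; induction bs as [|b bs IH]; intros ws; simpl.
  - split.
    + intros [<-|[]]. split; [reflexivity|intros; lia].
    + intros [H _]. destruct ws; [auto|simpl in H; lia].
  - rewrite in_flat_map. split.
    + intros [w [Hw Hin]]. apply in_map_iff in Hin. destruct Hin as [ws' [<- Hws']].
      apply IH in Hws'. apply in_seq in Hw. destruct Hws' as [H1 H2].
      simpl. split; [lia|]. intros [|j] Hj; simpl; [lia|apply H2; lia].
    + intros [H1 H2]. destruct ws as [|w ws']; simpl in H1; [lia|].
      exists w. split.
      * apply in_seq. specialize (H2 0%nat ltac:(lia)). simpl in H2. lia.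
      * apply in_map. apply IH. split; [lia|]. intros j Hj. apply (H2 (S j)). lia.
Qed.

Lemma NoDup_map_inj_on {A B} (f : A -> B) l :
  NoDup l -> (forall x y, In x l -> In y l -> f x = f y -> x = y) -> NoDup (map f l).
Proof.
  induction l; simpl; intros Hn Hi; [constructor|].
  inversion Hn; subst. constructor.
  - intros Hin. apply in_map_iff in Hin. destruct Hin as [y [Ey Hy]].
    assert (y = a) by (apply Hi; auto). subst; contradiction.
  - apply IHl; auto.
Qed.

Lemma NoDup_tuples bs : NoDup (tuples bs).
Proof.
  induction bs as [|b bs IH]; simpl.
  - constructor; [simpl; tauto|constructor].
  - generalize 0%nat. induction b; intros s; simpl; [constructor|].
    apply NoDup_app.
    + apply NoDup_map_inj_on; auto. intros x y _ _ E; inversion E; auto.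
    + apply IHb.
    + intros a Ha1 Ha2. apply in_map_iff in Ha1. destruct Ha1 as [w [<- _]].
      apply in_flat_map in Ha2. destruct Ha2 as [w' [Hw' Hin]]. apply in_seq in Hw'.
      apply in_map_iff in Hin. destruct Hin as [w'' [E _]]. inversion E. lia.
Qed.

Definition decb (P : Prop) : bool := if excluded_middle_informative P then true else false.

Lemma ccount_length_filter {A} (P : A -> Prop) l : ccount P l = length (filter (fun x => decb (P x)) l).
Proof.
  induction l; simpl; auto. rewrite IHl. unfold dec01.
  case_eq (decb (P a)); intros E; unfold decb in E;
  destruct (excluded_middle_informative (P a)); try discriminate; simpl; lia.
Qed.

Lemma ccount_bij {A B} (P1 : A -> Prop) (P2 : B -> Prop) l1 l2 (f : A -> B) :
  NoDup l1 -> NoDup l2 ->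
  (forall x, In x l1 -> P1 x -> In (f x) l2 /\ P2 (f x)) ->
  (forall x y, In x l1 -> In y l1 -> P1 x -> P1 y -> f x = f y -> x = y) ->
  (forall y, In y l2 -> P2 y -> exists x, In x l1 /\ P1 x /\ f x = y) ->
  ccount P1 l1 = ccount P2 l2.
Proof.
  intros N1 N2 Hmap Hinj Hsur. rewrite !ccount_length_filter.
  set (F1 := filter (fun x => decb (P1 x)) l1). set (F2 := filter (fun x => decb (P2 x)) l2).
  assert (HF1 : forall x, In x F1 <-> In x l1 /\ P1 x).
  { intros x. unfold F1. rewrite filter_In. unfold decb. destruct (excluded_middle_informative (P1 x)); intuition congruence. }
  assert (HF2 : forall x, In x F2 <-> In x l2 /\ P2 x).
  { intros x. unfold F2. rewrite filter_In. unfold decb. destruct (excluded_middle_informative (P2 x)); intuition congruence. }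
  assert (NF1 : NoDup F1) by (apply NoDup_filter; auto).
  assert (NF2 : NoDup F2) by (apply NoDup_filter; auto).
  assert (NM : NoDup (map f F1)).
  { apply NoDup_map_inj_on; auto. intros x y Hx Hy. apply HF1 in Hx. apply HF1 in Hy. apply Hinj; tauto. }
  apply Nat.le_antisymm.
  - rewrite <- (length_map f F1). apply NoDup_incl_length; auto.
    intros y Hy. apply in_map_iff in Hy. destruct Hy as [x [<- Hx]]. apply HF1 in Hx. apply HF2. apply Hmap; tauto.
  - rewrite <- (length_map f F1). apply NoDup_incl_length; auto.
    intros y Hy. apply HF2 in Hy. destruct (Hsur y) as [x [Hx [Px Ex]]]; try tauto.
    apply in_map_iff. exists x. split; auto. apply HF1; auto.
Qed.

Lemma lcm_list_pos l : (forall a, In a l -> (0 < a)%nat) -> (0 < lcm_list l)%nat.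
Proof.
  induction l; simpl; intros H; [lia|].
  assert (0 < a)%nat by auto. assert (0 < lcm_list l)%nat by auto.
  destruct (Nat.eq_dec (Nat.lcm a (lcm_list l)) 0) as [E|E]; [|lia].
  apply Nat.lcm_eq_0 in E. lia.
Qed.

Lemma lcm_list_divide l a : In a l -> Nat.divide a (lcm_list l).
Proof.
  induction l; simpl; [tauto|]. intros [E|E].
  - subst. apply Nat.divide_lcm_l.
  - eapply Nat.divide_trans; [apply IHl; auto|apply Nat.divide_lcm_r].
Qed.

Lemma lcm_list_least l d : (forall a, In a l -> Nat.divide a d) -> Nat.divide (lcm_list l) d.
Proof.
  induction l; simpl; intros H.
  - apply Nat.divide_1_l.
  - apply Nat.lcm_least; auto.
Qed.

Lemma nth_map_lt {A B} (f : A -> B) l j d d0 : (j < length l)%nat -> nth j (map f l) d = f (nth j l d0).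
Proof.
  revert j; induction l; simpl; intros j H; [lia|]. destruct j; auto. apply IHl; lia.
Qed.

Section CRT.
Variables (u : nat) (al be : nat -> nat) (x : nat -> R).
Hypotheses (Hal : forall i, (2 <= i <= u)%nat -> (0 < al i)%nat).

Let is := idx2 u.
Let bs := map al is.
Definition period := lcm_list (map al (idx2 u)).
Definition residues (w : nat) : list nat := map (fun i => (w mod al i)%nat) (idx2 u).

Lemma In_is i : In i is <-> (2 <= i <= u)%nat.
Proof. unfold is, idx2. rewrite in_seq. lia. Qed.

Lemma length_is : length is = (u - 1)%nat.
Proof. unfold is, idx2. rewrite length_seq; auto. Qed.

Lemma nth_is j : (j < u - 1)%nat -> nth j is 0%nat = (2 + j)%nat.
Proof. intros; unfold is, idx2. rewrite seq_nth; auto. Qed.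

Lemma period_pos : (0 < period)%nat.
Proof.
  apply lcm_list_pos. intros a Ha. apply in_map_iff in Ha. destruct Ha as [i [<- Hi]].
  apply Hal. apply In_is; auto.
Qed.

Lemma divide_period i : (2 <= i <= u)%nat -> Nat.divide (al i) period.
Proof. intros H. apply lcm_list_divide. apply in_map. apply In_is; auto. Qed.

Lemma nth_residues w j : (j < u - 1)%nat -> nth j (residues w) 0%nat = (w mod al (2 + j))%nat.
Proof.
  intros H. unfold residues. rewrite (nth_map_lt _ _ _ _ 0%nat); [|fold is; rewrite length_is; auto].
  fold is. rewrite nth_is; auto.
Qed.

Lemma nth_bs j : (j < u - 1)%nat -> nth j bs 0%nat = al (2 + j).
Proof.
  intros H. unfold bs. rewrite (nth_map_lt _ _ _ _ 0%nat); [|rewrite length_is; auto]. rewrite nth_is; auto.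
Qed.

Lemma length_residues w : length (residues w) = (u - 1)%nat.
Proof. unfold residues. rewrite length_map. fold is. apply length_is. Qed.

Lemma length_bs : length bs = (u - 1)%nat.
Proof. unfold bs. rewrite length_map. apply length_is. Qed.

Lemma residues_in_tuples w : In (residues w) (tuples bs).
Proof.
  apply In_tuples. rewrite length_residues, length_bs. split; auto. intros j Hj.
  rewrite nth_residues, nth_bs by auto. apply Nat.mod_upper_bound. specialize (Hal (2 + j) ltac:(lia)). lia.
Qed.

Lemma wcomp_residues w i : (2 <= i <= u)%nat -> wcomp (residues w) i = (w mod al i)%nat.
Proof.
  intros H. unfold wcomp. rewrite nth_residues by lia. f_equal. f_equal. lia.
Qed.

Lemma inV_residues w : inV u al (residues w).
Proof.
  intros i j Hi Hj. rewrite !wcomp_residues by auto.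
  pose proof (Nat.div_mod_eq w (al i)) as Ei. pose proof (Nat.div_mod_eq w (al j)) as Ej.
  exists (w / al j + al i)%nat, (w / al i + al j)%nat. split; [|split].
  - pose proof (Hal i Hi). lia.
  - pose proof (Hal j Hj). lia.
  - rewrite !Nat2Z.inj_mul, !Nat2Z.inj_add.
    assert (Z.of_nat w = (Z.of_nat (al i) * Z.of_nat (w / al i) + Z.of_nat (w mod al i))%Z) by (rewrite <- Nat2Z.inj_mul, <- Nat2Z.inj_add; congruence).
    assert (Z.of_nat w = (Z.of_nat (al j) * Z.of_nat (w / al j) + Z.of_nat (w mod al j))%Z) by (rewrite <- Nat2Z.inj_mul, <- Nat2Z.inj_add; congruence).
    lia.
Qed.

Lemma divide_sub_of_mod_eq a w w' : (0 < a)%nat -> (w <= w')%nat -> (w mod a = w' mod a)%nat -> Nat.divide a (w' - w).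
Proof.
  intros Ha Hle E.
  pose proof (Nat.div_mod_eq w a) as Ew. pose proof (Nat.div_mod_eq w' a) as Ew'.
  exists (w' / a - w / a)%nat. rewrite Nat.mul_sub_distr_r. nia.
Qed.

Lemma residues_inj_le w w' : (w < period)%nat -> (w' < period)%nat -> (w <= w')%nat ->
  (forall i, (2 <= i <= u)%nat -> (w mod al i = w' mod al i)%nat) -> w = w'.
Proof.
  intros H1 H2 Hle Hm.
  assert (HD : Nat.divide period (w' - w)).
  { unfold period. apply lcm_list_least. intros a Ha. apply in_map_iff in Ha. destruct Ha as [i [<- Hi]].
    apply In_is in Hi. apply divide_sub_of_mod_eq; auto. }
  destruct HD as [k Hk]. destruct k; lia.
Qed.

Lemma residues_inj w w' : (w < period)%nat -> (w' < period)%nat -> residues w = residues w' -> w = w'.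
Proof.
  intros H1 H2 E.
  assert (Hm : forall i, (2 <= i <= u)%nat -> (w mod al i = w' mod al i)%nat).
  { intros i Hi. rewrite <- !wcomp_residues by auto. rewrite E; auto. }
  destruct (le_lt_dec w w') as [h|h]; [apply residues_inj_le; auto|].
  symmetry; apply residues_inj_le; auto; [lia|intros; symmetry; auto].
Qed.

(* [inV] says exactly that the congruences n = w_i (mod alpha_i) are pairwise compatible,
   so the Chinese remainder theorem applies. *)
Lemma residues_surj ws : In ws (tuples bs) -> inV u al ws -> exists w, (w < period)%nat /\ residues w = ws.
Proof.
  intros Hws HV. apply In_tuples in Hws. destruct Hws as [Hlen Hlt]. rewrite length_bs in Hlen, Hlt.
  set (l := map (fun i => (Z.of_nat (al i), Z.of_nat (wcomp ws i))) is).
  destruct (Z_crt_list l) as [z Hz].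
  - intros p Hp. unfold l in Hp. apply in_map_iff in Hp. destruct Hp as [i [<- Hi]]. apply In_is in Hi.
    simpl. specialize (Hal i Hi). lia.
  - intros p q Hp Hq. unfold l in Hp, Hq. apply in_map_iff in Hp. apply in_map_iff in Hq.
    destruct Hp as [i [<- Hi]]. destruct Hq as [j [<- Hj]]. apply In_is in Hi. apply In_is in Hj. simpl.
    destruct (HV i j Hi Hj) as [a [b [_ [_ Hab]]]]. rewrite Hab. rewrite !Nat2Z.inj_mul.
    apply Z.divide_sub_r.
    + apply Z.divide_mul_l. apply Z.gcd_divide_r.
    + apply Z.divide_mul_l. apply Z.gcd_divide_l.
  - pose proof period_pos as HL.
    exists (Z.to_nat (z mod Z.of_nat period)).
    pose proof (Z.mod_pos_bound z (Z.of_nat period) ltac:(lia)) as Hb.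
    split; [lia|].
    apply nth_ext with 0%nat 0%nat; [rewrite length_residues; lia|].
    intros j Hj. rewrite length_residues in Hj. rewrite nth_residues by auto.
    replace (nth j ws 0%nat) with (wcomp ws (2 + j)) by (unfold wcomp; f_equal; lia).
    specialize (Hlt j Hj). rewrite nth_bs in Hlt by auto.
    replace (nth j ws 0%nat) with (wcomp ws (2 + j)) in Hlt by (unfold wcomp; f_equal; lia).
    assert (Ha : (0 < al (2 + j))%nat) by (apply Hal; lia).
    assert (Hzd : (Z.of_nat (al (2 + j)) | z - Z.of_nat (wcomp ws (2 + j)))%Z).
    { apply (Hz (Z.of_nat (al (2 + j)), Z.of_nat (wcomp ws (2 + j)))). unfold l. apply in_map_iff.
      exists (2 + j)%nat. split; auto. apply In_is. lia. }
    assert (HdL : (Z.of_nat (al (2 + j)) | Z.of_nat period)%Z) by (destruct (divide_period (2 + j) ltac:(lia)) as [k' Hk']; exists (Z.of_nat k'); lia).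
    apply Nat2Z.inj. rewrite Nat2Z.inj_mod, Z2Nat.id by lia.
    rewrite <- Zmod_div_mod by (auto; lia).
    destruct Hzd as [k Hk]. replace z with (Z.of_nat (wcomp ws (2 + j)) + k * Z.of_nat (al (2 + j)))%Z by lia.
    rewrite Z.mod_add by lia. apply Z.mod_small. lia.
Qed.

Definition residues_in_W (w : nat) : Prop := forall i, (2 <= i <= u)%nat -> inW (al i) (be i) (x i) (w mod al i)%nat.

Lemma Mformula_count : ccount residues_in_W (seq 0 period) = Mformula u al be x.
Proof.
  unfold Mformula. fold is. fold bs.
  apply ccount_bij with (f := residues).
  - apply seq_NoDup.
  - apply NoDup_tuples.
  - intros w Hw Pw. split; [apply residues_in_tuples|]. split; [|apply inV_residues].
    intros i Hi. rewrite wcomp_residues; auto.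
  - intros w w' Hw Hw' _ _ E. apply in_seq in Hw. apply in_seq in Hw'. apply residues_inj; auto; lia.
  - intros ws Hws [HW HV]. destruct (residues_surj ws Hws HV) as [w [Hw E]].
    exists w. split; [apply in_seq; lia|]. split; auto.
    intros i Hi. rewrite <- wcomp_residues by auto. rewrite E. auto.
Qed.

Lemma Mformula_le : (Mformula u al be x <= period)%nat.
Proof. rewrite <- Mformula_count. pose proof (ccount_le_length residues_in_W (seq 0 period)). rewrite length_seq in H. auto. Qed.

End CRT.

Open Scope R_scope.

Definition not_integer (x : R) : Prop := forall z : Z, x <> IZR z.

Lemma not_integer_dist x : not_integer x -> exists d, 0 < d /\ forall z : Z, d <= Rabs (x - IZR z).
Proof.
  intros H. destruct (archimed x) as [H1 H2].
  set (f := (up x - 1)%Z).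
  assert (Hf1 : IZR f <= x) by (unfold f; rewrite minus_IZR; simpl; lra).
  assert (Hf2 : x < IZR f + 1) by (unfold f; rewrite minus_IZR; simpl; lra).
  assert (Hf3 : IZR f < x) by (destruct (Req_dec (IZR f) x) as [E|E]; [exfalso; apply (H f); auto|lra]).
  exists (Rmin (x - IZR f) (IZR f + 1 - x)). split; [apply Rmin_case; lra|].
  intros z. destruct (Z_le_gt_dec z f) as [h|h].
  - apply IZR_le in h. rewrite Rabs_right by lra. pose proof (Rmin_l (x - IZR f) (IZR f + 1 - x)). lra.
  - assert (h' : (f + 1 <= z)%Z) by lia. apply IZR_le in h'. rewrite plus_IZR in h'. simpl in h'.
    rewrite Rabs_left1 by lra. pose proof (Rmin_r (x - IZR f) (IZR f + 1 - x)). lra.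
Qed.

Lemma not_integer_dist_list (xs : list R) : exists d, 0 < d /\ forall x, In x xs -> not_integer x -> forall z : Z, d <= Rabs (x - IZR z).
Proof.
  induction xs as [|a xs [d [Hd IH]]].
  - exists 1; split; [lra|simpl; tauto].
  - destruct (classic (not_integer a)) as [Ha|Ha].
    + destruct (not_integer_dist a Ha) as [d' [Hd' H']].
      exists (Rmin d d'). split; [apply Rmin_case; lra|]. intros x [E|E] Hx z.
      * subst. pose proof (Rmin_r d d'). specialize (H' z). lra.
      * pose proof (Rmin_l d d'). specialize (IH x E Hx z). lra.
    + exists d; split; auto. intros x [E|E] Hx z; [subst; contradiction|auto].
Qed.

Lemma IZR_abs_lt1 (w : Z) : Rabs (IZR w) < 1 -> w = 0%Z.
Proof.
  intros H. apply Rabs_def2 in H. destruct H as [H1 H2].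
  assert (-1 < w)%Z by (apply lt_IZR; simpl; lra). assert (w < 1)%Z by (apply lt_IZR; simpl; lra). lia.
Qed.

Definition attained (Q P : list R) (n : nat) : Prop :=
  exists l : nat, (1 <= l)%nat /\ peval Q (INR l) = peval P (INR n).

Lemma nat_eventually_ge (N : R) : exists N' : nat, forall n : nat, (N' <= n)%nat -> N <= INR n.
Proof.
  destruct (nat_above N) as [N' HN']. exists N'. intros n Hn. apply le_INR in Hn. lra.
Qed.

Lemma is_rat_IZR z : is_rat (IZR z).
Proof. exists z, 1%Z. split; [lia|]. simpl. field. Qed.

Lemma is_rat_INR n : is_rat (INR n).
Proof. rewrite INR_IZR_INZ. apply is_rat_IZR. Qed.

Lemma is_rat_minus a b : is_rat a -> is_rat b -> is_rat (a - b).
Proof.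
  intros [p1 [r1 [H1 E1]]] [p2 [r2 [H2 E2]]]. exists (p1 * r2 - p2 * r1)%Z, (r1 * r2)%Z. split; [lia|].
  subst. rewrite minus_IZR, !mult_IZR. field. split; apply not_0_IZR; auto.
Qed.

Lemma is_rat_mult a b : is_rat a -> is_rat b -> is_rat (a * b).
Proof.
  intros [p1 [r1 [H1 E1]]] [p2 [r2 [H2 E2]]]. exists (p1 * p2)%Z, (r1 * r2)%Z. split; [lia|].
  subst. rewrite !mult_IZR. field. split; apply not_0_IZR; auto.
Qed.

Lemma is_rat_denominator (x : R) : is_rat x -> exists (a : nat) (b : Z), (1 <= a)%nat /\ x * INR a = IZR b.
Proof.
  intros [p [r [Hr E]]]. exists (Z.abs_nat r), (p * Z.sgn r)%Z. split; [lia|].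
  rewrite INR_IZR_INZ, Nat2Z.inj_abs_nat. subst.
  destruct (Z_lt_le_dec 0 r) as [h|h].
  - rewrite Z.abs_eq, Z.sgn_pos by lia. rewrite Z.mul_1_r. field. apply not_0_IZR; lia.
  - rewrite Z.abs_neq, Z.sgn_neg by lia. rewrite opp_IZR, mult_IZR. simpl. field. apply not_0_IZR; lia.
Qed.

Section Pair.
Variables (P Q : list R) (m : nat).
Hypotheses (HP : has_degree P m) (HQ : has_degree Q m) (Hm : (1 <= m)%nat)
  (HaP : 0 < nth m P 0) (HaQ : 0 < nth m Q 0).
Let c := scale P Q m.
Let d := offset P Q m.

(* Two solutions n < n' <= n + H with values l, l' would give l' - l = c (n' - n) + o(1),
   while c h (1 <= h <= H) stays a fixed distance away from the integers. *)
Lemma density0_irrational_scale : (forall h : nat, (1 <= h)%nat -> not_integer (c * INR h)) -> density (attained Q P) 0.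
Proof.
  intros Hirr. apply density0_spaced. intros H HH.
  destruct (not_integer_dist_list (map (fun h => c * INR h) (seq 1 H))) as [del [Hdel Hd]].
  destruct (solution_near_line P Q m HP HQ Hm HaP HaQ (del / 3) ltac:(lra)) as [N HN].
  destruct (nat_eventually_ge N) as [N' HN'].
  exists N'. intros n n' Hn Hnn' Hn'H [l [Hl El]] [l' [Hl' El']].
  assert (A1 : Rabs (INR l - c * INR n - d) < del / 3) by (apply HN; auto; apply (le_INR 1); auto).
  assert (A2 : Rabs (INR l' - c * INR n' - d) < del / 3) by (apply HN; auto; [apply HN'; lia|apply (le_INR 1); auto]).
  set (h := (n' - n)%nat).
  assert (Hx : In (c * INR h) (map (fun h => c * INR h) (seq 1 H))).
  { apply (in_map (fun h0 => c * INR h0)). apply in_seq. unfold h. lia. }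
  specialize (Hd _ Hx (Hirr h ltac:(unfold h; lia)) (Z.of_nat l' - Z.of_nat l)%Z).
  rewrite minus_IZR, <- !INR_IZR_INZ in Hd.
  assert (Eh : INR h = INR n' - INR n) by (unfold h; rewrite minus_INR by lia; reflexivity).
  rewrite Eh in Hd.
  apply Rabs_def2 in A1. apply Rabs_def2 in A2.
  assert (Rabs (c * (INR n' - INR n) - (INR l' - INR l)) < del) by (apply Rabs_def1; lra).
  lra.
Qed.

(* With c = b / a, the numbers c n + d take only finitely many values modulo 1; the
   non-integral ones stay a fixed distance away from the integers, which contradicts
   l = c n + d + o(1) for a solution l. *)
Lemma attained_on_line : is_rat c -> exists N : nat, forall n, (N <= n)%nat ->
  attained Q P n -> is_rat d /\ peval Q (c * INR n + d) = peval P (INR n).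
Proof.
  intros Hc.
  destruct (is_rat_denominator c Hc) as [al [be [Hal Hab]]].
  destruct (not_integer_dist_list (map (fun s => c * INR s + d) (seq 0 al))) as [del [Hdel Hd]].
  destruct (solution_near_line P Q m HP HQ Hm HaP HaQ (Rmin del (1/2))) as [N1 HN1].
  { apply Rmin_case; lra. }
  pose proof (Rmin_l del (1/2)). pose proof (Rmin_r del (1/2)).
  destruct (nat_eventually_ge N1) as [N HN]. exists N.
  intros n Hn [l [Hl E]].
  assert (A : Rabs (INR l - c * INR n - d) < Rmin del (1/2)) by (apply HN1; auto; apply (le_INR 1); auto).
  pose proof (Nat.div_mod_eq n al) as En.
  set (k := (n / al)%nat) in *. set (s := (n mod al)%nat) in *.
  assert (Hs : (s < al)%nat) by (apply Nat.mod_upper_bound; lia).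
  assert (Ecn : c * INR n = IZR be * INR k + c * INR s).
  { rewrite En, plus_INR, mult_INR, <- Hab. ring. }
  assert (Hx : In (c * INR s + d) (map (fun s => c * INR s + d) (seq 0 al))).
  { apply (in_map (fun s0 => c * INR s0 + d)). apply in_seq. lia. }
  destruct (classic (not_integer (c * INR s + d))) as [Hni|Hni].
  - exfalso. specialize (Hd _ Hx Hni (Z.of_nat l - be * Z.of_nat k)%Z).
    rewrite minus_IZR, mult_IZR, <- !INR_IZR_INZ in Hd.
    replace (c * INR s + d - (INR l - IZR be * INR k)) with (- (INR l - c * INR n - d)) in Hd by (rewrite Ecn; ring).
    rewrite Rabs_Ropp in Hd. lra.
  - unfold not_integer in Hni. apply not_all_ex_not in Hni. destruct Hni as [z0 Hz0].
    apply NNPP in Hz0.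
    assert (Ew : INR l - c * INR n - d = IZR (Z.of_nat l - be * Z.of_nat k - z0)).
    { rewrite !minus_IZR, mult_IZR, <- !INR_IZR_INZ. rewrite Ecn, <- Hz0. ring. }
    rewrite Ew in A. assert (Hw : Rabs (IZR (Z.of_nat l - be * Z.of_nat k - z0)) < 1) by lra.
    apply IZR_abs_lt1 in Hw. rewrite Hw in Ew. simpl in Ew.
    split.
    + replace d with (IZR z0 - c * INR s) by lra.
      apply is_rat_minus; [apply is_rat_IZR|apply is_rat_mult; auto; apply is_rat_INR].
    + replace (c * INR n + d) with (INR l) by lra. auto.
Qed.

Lemma attained_finite_no_shift :
  is_rat c -> ~ (exists e, is_rat e /\ forall z, peval Q (c * z + e) = peval P z) ->
  exists N : nat, forall n, (N <= n)%nat -> ~ attained Q P n.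
Proof.
  intros Hc NS. destruct (attained_on_line Hc) as [N1 HN1].
  destruct (shift_exact_or_eventually_ne P Q c d) as [Hid|[N2 HN2]].
  - exists N1. intros n Hn Hsol. destruct (HN1 n Hn Hsol) as [Hr _].
    apply NS. exists d. auto.
  - destruct (nat_eventually_ge N2) as [N HN]. exists (Nat.max N1 N). intros n Hn Hsol.
    apply (HN2 (INR n)); [apply HN; lia|]. apply (HN1 n ltac:(lia) Hsol).
Qed.

Lemma attained_iff_integer e : (forall z, peval Q (c * z + e) = peval P z) ->
  exists N : nat, forall n, (N <= n)%nat -> (attained Q P n <-> exists z : Z, IZR z = c * INR n + e).
Proof.
  intros Hid.
  pose proof (scale_pos P Q m) as Hc. fold c in Hc.
  destruct (peval_eventually_increasing P m HP Hm HaP) as [X [HX1 HX]].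
  set (Y := Rmax 1 (c * X + e)).
  destruct (peval_unbounded m Hm P HP HaP (pabs Q Y + 1)) as [N1 HN1].
  destruct (nat_eventually_ge (Rmax (Rmax N1 X) ((1 + Rabs e) / c))) as [N HN].
  exists N. intros n Hn. specialize (HN n Hn).
  assert (H1 : N1 <= INR n) by (pose proof (Rmax_l N1 X); pose proof (Rmax_l (Rmax N1 X) ((1 + Rabs e) / c)); lra).
  assert (H2 : X <= INR n) by (pose proof (Rmax_r N1 X); pose proof (Rmax_l (Rmax N1 X) ((1 + Rabs e) / c)); lra).
  assert (H3 : (1 + Rabs e) / c <= INR n) by (pose proof (Rmax_r (Rmax N1 X) ((1 + Rabs e) / c)); lra).
  split.
  - intros [l [Hl E]]. exists (Z.of_nat l). rewrite <- INR_IZR_INZ.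
    assert (HlY : Y < INR l).
    { destruct (Rlt_or_le Y (INR l)) as [h|h]; auto. exfalso.
      pose proof (Rabs_peval_le_pabs_bound Q Y (INR l) (pos_INR l) h) as Hb. rewrite E in Hb.
      specialize (HN1 (INR n) H1). pose proof (Rle_abs (peval P (INR n))). lra. }
    assert (Hle : X <= (INR l - e) / c).
    { assert (c * X + e < INR l) by (unfold Y in HlY; pose proof (Rmax_r 1 (c * X + e)); lra).
      apply Rmult_le_reg_l with c; auto. replace (c * ((INR l - e) / c)) with (INR l - e) by (field; lra). lra. }
    assert (EP : peval P ((INR l - e) / c) = peval P (INR n)).
    { rewrite <- Hid. replace (c * ((INR l - e) / c) + e) with (INR l) by (field; lra). auto. }
    destruct (Rtotal_order ((INR l - e) / c) (INR n)) as [h|[h|h]].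
    + pose proof (HX _ _ Hle h). lra.
    + rewrite <- h. field. lra.
    + pose proof (HX _ _ H2 h). lra.
  - intros [z Hz].
    assert (Hz1 : 1 <= IZR z).
    { rewrite Hz. apply Rmult_le_compat_l with (r := c) in H3; [|lra].
      replace (c * ((1 + Rabs e) / c)) with (1 + Rabs e) in H3 by (field; lra).
      pose proof (Rle_abs (- e)). rewrite Rabs_Ropp in H. lra. }
    assert (Hz0 : (1 <= z)%Z) by (apply le_IZR; auto).
    exists (Z.to_nat z). split; [lia|].
    rewrite INR_IZR_INZ, Z2Nat.id by lia. rewrite Hz. apply Hid.
Qed.

End Pair.

Lemma integer_iff_inW (a b : nat) (e : R) (n : nat) : (0 < a)%nat -> (0 < b)%nat ->
  ((exists z : Z, IZR z = INR b / INR a * INR n + e) <-> inW a b e (n mod a)).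
Proof.
  intros Ha Hb.
  assert (Ha' : 0 < INR a) by (apply lt_0_INR; auto). assert (Hb' : 0 < INR b) by (apply lt_0_INR; auto).
  pose proof (Nat.div_mod_eq n a) as En.
  assert (Ew : INR n = INR a * INR (n / a) + INR (n mod a)) by (rewrite En at 1; rewrite plus_INR, mult_INR; auto).
  split.
  - intros [z Hz]. split; [apply Nat.mod_upper_bound; lia|].
    exists (z - Z.of_nat b * Z.of_nat (n / a))%Z. rewrite minus_IZR, mult_IZR, <- !INR_IZR_INZ, Hz, Ew.
    field. lra.
  - intros [_ [z Hz]]. exists (z + Z.of_nat b * Z.of_nat (n / a))%Z.
    rewrite plus_IZR, mult_IZR, <- !INR_IZR_INZ, Ew, Hz. field. lra.
Qed.

Lemma Rabs_le_inv a b : Rabs a <= b -> - b <= a <= b.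
Proof. intros H. pose proof (Rle_abs a). pose proof (Rle_abs (- a)). rewrite Rabs_Ropp in *. lra. Qed.

Lemma has_card_exists (S : R -> Prop) (L : list R) : (forall z, S z -> In z L) -> exists n, has_card S n.
Proof.
  intros H. set (L' := filter (fun z => decb (S z)) (nodup Req_dec_T L)).
  exists (length L'). exists L'. split; [|split; [reflexivity|]].
  - apply NoDup_filter, NoDup_nodup.
  - intros z. unfold L'. rewrite filter_In. unfold decb.
    destruct (excluded_middle_informative (S z)); split; intros Hz.
    + exact s.
    + split; auto; apply nodup_In; auto.
    + destruct Hz; discriminate.
    + contradiction.
Qed.

Lemma has_card_unique S n n' : has_card S n -> has_card S n' -> n = n'.
Proof.
  intros [l [N1 [L1 H1]]] [l' [N2 [L2 H2]]]. subst.
  apply Nat.le_antisymm; apply NoDup_incl_length; auto; intros z Hz.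
  - apply H2, H1; auto.
  - apply H1, H2; auto.
Qed.

Lemma Z2Nat_neg k : (k < 0)%Z -> Z.to_nat k = 0%nat.
Proof. intros; destruct k; try lia; reflexivity. Qed.

(* the integer part of x, truncated to 0 for negative x *)
Definition nfloor (x : R) : nat := Z.to_nat (up x - 1).

Lemma nfloor_le x : INR (nfloor x) <= Rmax x 0.
Proof.
  unfold nfloor. destruct (archimed x) as [H1 H2].
  destruct (Z_lt_le_dec (up x - 1) 0) as [h|h].
  - rewrite Z2Nat_neg by lia. simpl. apply Rmax_r.
  - rewrite INR_IZR_INZ, Z2Nat.id by lia. rewrite minus_IZR. simpl.
    pose proof (Rmax_l x 0). lra.
Qed.

Lemma nfloor_gt x : x - 1 < INR (nfloor x).
Proof.
  unfold nfloor. destruct (archimed x) as [H1 H2].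
  destruct (Z_lt_le_dec (up x - 1) 0) as [h|h].
  - rewrite Z2Nat_neg by lia. simpl.
    assert (up x <= 0)%Z by lia. apply IZR_le in H. simpl in H. lra.
  - rewrite INR_IZR_INZ, Z2Nat.id by lia. rewrite minus_IZR. simpl. lra.
Qed.

Lemma INR_le_nfloor x n : 0 <= x -> (INR n <= x <-> (n <= nfloor x)%nat).
Proof.
  intros Hx. unfold nfloor. destruct (archimed x) as [H1 H2].
  assert (Hu0 : (0 < up x)%Z) by (apply lt_IZR; simpl; lra).
  split.
  - intros Hn. assert (Z.of_nat n < up x)%Z.
    { apply lt_IZR. rewrite <- INR_IZR_INZ. lra. }
    lia.
  - intros Hn. assert (Z.of_nat n <= up x - 1)%Z by lia. apply IZR_le in H.
    rewrite <- INR_IZR_INZ, minus_IZR in H. simpl in H. lra.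
Qed.

Lemma ccount_In_le_length (l l' : list nat) : NoDup l -> (ccount (fun n => In n l') l <= length l')%nat.
Proof.
  intros N. rewrite ccount_length_filter. apply NoDup_incl_length; [apply NoDup_filter; auto|].
  intros z Hz. apply filter_In in Hz. destruct Hz as [_ Hz]. unfold decb in Hz.
  destruct (excluded_middle_informative (In z l')); auto; discriminate.
Qed.

Lemma ccount_window_le (a w : R) (l : list nat) : NoDup l -> 0 <= w ->
  INR (ccount (fun n => a < INR n < a + w) l) <= w + 2.
Proof.
  intros N Hw.
  set (k := nfloor a). set (j := (nfloor w + 2)%nat).
  assert (Hsub : forall n, a < INR n < a + w -> In n (seq k j)).
  { intros n [Hn1 Hn2]. apply in_seq.
    pose proof (nfloor_le a) as Ka. pose proof (nfloor_gt a) as Kb. pose proof (nfloor_gt w) as Kw.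
    fold k in Ka, Kb. split.
    - destruct (le_lt_dec k n) as [h|h]; auto. exfalso.
      apply lt_INR in h. unfold Rmax in Ka. destruct (Rle_dec a 0).
      + pose proof (pos_INR n). lra.
      + assert (INR n + 1 <= INR k) by (rewrite <- S_INR; apply le_INR; apply INR_lt in h; lia). lra.
    - unfold j. apply INR_lt. rewrite !plus_INR. simpl.
      assert (a < INR k + 1).
      { unfold Rmax in Ka. destruct (Rle_dec a 0); lra. }
      lra. }
  eapply Rle_trans.
  - apply le_INR. eapply Nat.le_trans; [apply ccount_mono; intros n _ Hn; apply Hsub; exact Hn|].
    apply ccount_In_le_length; auto.
  - rewrite length_seq. unfold j. rewrite plus_INR. simpl.
    pose proof (nfloor_le w). unfold Rmax in H. destruct (Rle_dec w 0); lra.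
Qed.

Lemma ccount_le_or {A} (P P' E : A -> Prop) l : (forall x, In x l -> P x -> P' x \/ E x) ->
  (ccount P l <= ccount P' l + ccount E l)%nat.
Proof.
  induction l; simpl; intros H; [lia|].
  assert (dec01 (P a) <= dec01 (P' a) + dec01 (E a))%nat.
  { unfold dec01. destruct (excluded_middle_informative (P a)); [|lia].
    destruct (H a (or_introl eq_refl) p); [destruct (excluded_middle_informative (P' a)); [lia|contradiction]|].
    destruct (excluded_middle_informative (E a)); [lia|contradiction]. }
  assert (ccount P l <= ccount P' l + ccount E l)%nat by (apply IHl; intros; apply H; auto). lia.
Qed.

Lemma ccount_or_le {A} (E1 E2 : A -> Prop) l : (ccount (fun x => E1 x \/ E2 x) l <= ccount E1 l + ccount E2 l)%nat.
Proof.
  pose proof (ccount_le_or (fun x => E1 x \/ E2 x) E1 E2 l). apply H. intros; tauto.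
Qed.

Lemma asymp_linear_eventually_bounded_diff y y' rho (R1 : nat) B :
  (forall r, (R1 <= r)%nat -> Rabs (y r - y' r) <= B) -> asymp_linear y rho -> asymp_linear y' rho.
Proof.
  intros H A.
  set (M := fold_right Rplus 0 (map (fun r => Rabs (y r - y' r)) (seq 0 R1))).
  assert (HM : forall r, (r < R1)%nat -> Rabs (y r - y' r) <= M).
  { intros r Hr. unfold M.
    assert (Hin : In r (seq 0 R1)) by (apply in_seq; lia).
    generalize (seq 0 R1) Hin. induction l; simpl; [tauto|].
    assert (forall l, 0 <= fold_right Rplus 0 (map (fun r => Rabs (y r - y' r)) l)).
    { induction l0; simpl; [lra|]. pose proof (Rabs_pos (y a0 - y' a0)). lra. }
    intros [E|E]; [subst; specialize (H0 l); lra|]. specialize (IHl E).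
    pose proof (Rabs_pos (y a - y' a)). lra. }
  apply asymp_linear_bounded_diff with (y := y) (B := Rabs B + Rabs M); auto.
  intros r. destruct (le_lt_dec R1 r) as [h|h].
  - specialize (H r h). pose proof (Rle_abs B). pose proof (Rabs_pos M). lra.
  - specialize (HM r h). pose proof (Rle_abs M). pose proof (Rabs_pos B). lra.
Qed.

Lemma ccount_seq0_cnt (G : nat -> Prop) s B : (s < B)%nat ->
  ccount (fun n => G n /\ (1 <= n)%nat /\ (n <= s)%nat) (seq 0 B) = cnt G s.
Proof.
  intros H. unfold cnt.
  replace B with (1 + s + (B - 1 - s))%nat by lia.
  rewrite !seq_app, !ccount_app. simpl.
  rewrite dec01_false by lia.
  rewrite (ccount_zero _ (seq (S s) _)) by (intros x Hx; apply in_seq in Hx; lia).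
  rewrite (ccount_ext _ G (seq 1 s)) by (intros x Hx; apply in_seq in Hx; split; [tauto|intros; repeat split; auto; lia]).
  lia.
Qed.

Section PreimageCount.
Variables (P Q1 : list R) (m : nat) (R0 : R) (G : nat -> Prop) (rho : R) (SS : R -> Prop).
Hypotheses (HP : has_degree P m) (HQ : has_degree Q1 m) (Hm : (1 <= m)%nat)
  (HaP : 0 < nth m P 0) (HaQ : 0 < nth m Q1 0)
  (Hinc : forall x y, R0 <= x -> x < y -> peval Q1 x < peval Q1 y)
  (HG : density G rho)
  (HS : forall z, SS z <-> R0 <= z /\ exists n : nat, (1 <= n)%nat /\ peval Q1 z = peval P (INR n) /\ G n).

Let c1 := scale P Q1 m.
Let d1 := offset P Q1 m.
Let R0' := Rmax R0 1.

Lemma Q1_inj x y : R0 <= x -> R0 <= y -> peval Q1 x = peval Q1 y -> x = y.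
Proof.
  intros Hx Hy E. destruct (Rtotal_order x y) as [h|[h|h]]; auto.
  - pose proof (Hinc x y Hx h). lra.
  - pose proof (Hinc y x Hy h). lra.
Qed.

Definition preimage (n : nat) : R := epsilon (inhabits 0) (fun z => R0' <= z /\ peval Q1 z = peval P (INR n)).

Lemma preimage_spec n : (exists z, R0' <= z /\ peval Q1 z = peval P (INR n)) -> R0' <= preimage n /\ peval Q1 (preimage n) = peval P (INR n).
Proof. intros H. unfold preimage. apply (epsilon_spec (inhabits 0) (fun z => R0' <= z /\ peval Q1 z = peval P (INR n))). auto. Qed.

Lemma R0'_ge : R0 <= R0' /\ 1 <= R0'.
Proof. unfold R0'. split; [apply Rmax_l|apply Rmax_r]. Qed.

Lemma preimage_eq z n : R0' <= z -> peval Q1 z = peval P (INR n) -> preimage n = z.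
Proof.
  intros Hz E. destruct (preimage_spec n) as [H1 H2]; [exists z; auto|].
  destruct R0'_ge. apply Q1_inj; lra.
Qed.

Lemma finite_below r : exists l, NoDup l /\ forall z, In z l <-> (SS z /\ 1 <= z <= INR r).
Proof.
  destruct (peval_unbounded m Hm P HP HaP (pabs Q1 (INR r) + 1)) as [Nr HNr].
  destruct (nat_eventually_ge Nr) as [Nr' HNr'].
  destruct (has_card_exists (fun z => SS z /\ 1 <= z <= INR r) (map preimage (seq 0 Nr'))) as [k [l Hl]].
  - intros z [Sz Hz]. apply HS in Sz. destruct Sz as [HR0 [n [Hn1 [E Gn]]]].
    destruct (le_lt_dec Nr' n) as [h|h].
    + exfalso. specialize (HNr (INR n) (HNr' n h)). rewrite <- E in HNr.
      pose proof (Rabs_peval_le_pabs_bound Q1 (INR r) z ltac:(lra) ltac:(lra)). pose proof (Rle_abs (peval Q1 z)). lra.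
    + apply in_map_iff. exists n. split; [|apply in_seq; lia].
      apply preimage_eq; auto. unfold R0', Rmax. destruct (Rle_dec R0 1); lra.
  - exists l. tauto.
Qed.

Lemma preimage_exists n : peval Q1 R0' <= peval P (INR n) ->
  exists z, R0' <= z /\ peval Q1 z = peval P (INR n).
Proof.
  intros Hn. destruct (peval_unbounded m Hm Q1 HQ HaQ (peval P (INR n))) as [Y HY].
  destruct (IVT_cor (fun z => peval Q1 z - peval P (INR n)) R0' (Rmax Y R0')) as [z [Hz Ez]].
  - apply continuity_minus; [apply continuity_peval|apply continuity_const; intros ? ?; reflexivity].
  - apply Rmax_r.
  - specialize (HY (Rmax Y R0') (Rmax_l _ _)).
    assert (peval Q1 R0' - peval P (INR n) <= 0) by lra.
    assert (0 <= peval Q1 (Rmax Y R0') - peval P (INR n)) by lra. nra.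
  - exists z. split; [lra|]. simpl in Ez. lra.
Qed.

Lemma preimage_eventually : exists N0 : nat, (1 <= N0)%nat /\ forall n, (N0 <= n)%nat ->
  R0' <= preimage n /\ peval Q1 (preimage n) = peval P (INR n) /\
  Rabs (preimage n - c1 * INR n - d1) < 1 /\
  (forall n', (N0 <= n')%nat -> preimage n = preimage n' -> n = n').
Proof.
  destruct (peval_eventually_increasing P m HP Hm HaP) as [XP [HXP1 HXP]].
  destruct (eventually_and _ _ (solution_near_line P Q1 m HP HQ Hm HaP HaQ 1 ltac:(lra))
             (eventually_and _ _ (peval_unbounded m Hm P HP HaP (peval Q1 R0')) (eventually_ge XP)))
    as [N HN].
  destruct (nat_eventually_ge N) as [N0 HN0].
  assert (Hpre : forall n, (N0 <= n)%nat ->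
            R0' <= preimage n /\ peval Q1 (preimage n) = peval P (INR n)).
  { intros n Hn. apply preimage_spec, preimage_exists.
    destruct (HN (INR n) (HN0 n Hn)) as [_ [H _]]. lra. }
  exists (S N0). split; [lia|]. intros n Hn.
  destruct (HN (INR n) (HN0 n ltac:(lia))) as [Hnear [_ HX]].
  destruct (Hpre n ltac:(lia)) as [Z1 Z2].
  split; [|split; [|split]]; auto.
  - apply Hnear; auto. destruct R0'_ge; lra.
  - intros n' Hn' E. destruct (Hpre n' ltac:(lia)) as [_ Z2'].
    destruct (HN (INR n') (HN0 n' ltac:(lia))) as [_ [_ HX']].
    rewrite E in Z2. apply INR_eq.
    destruct (Rtotal_order (INR n) (INR n')) as [h|[h|h]]; auto.
    + pose proof (HXP _ _ HX h). lra.
    + pose proof (HXP _ _ HX' h). lra.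
Qed.

Lemma preimage_index_large N : exists Z0, R0' <= Z0 /\
  forall z (n : nat), Z0 <= z -> peval Q1 z = peval P (INR n) -> (N <= n)%nat.
Proof.
  destruct (peval_unbounded m Hm Q1 HQ HaQ (pabs P (INR N) + 1)) as [Z0 HZ0].
  exists (Rmax R0' Z0). split; [apply Rmax_l|]. intros z n Hz E.
  destruct (le_lt_dec N n) as [h|h]; auto. exfalso.
  specialize (HZ0 z ltac:(pose proof (Rmax_r R0' Z0); lra)).
  assert (Hn : INR n <= INR N) by (apply le_INR; lia).
  pose proof (Rabs_peval_le_pabs_bound P (INR N) (INR n) (pos_INR n) Hn). rewrite <- E in H.
  pose proof (Rle_abs (peval Q1 z)). lra.
Qed.

Lemma c1_pos : 0 < c1.
Proof. apply scale_pos. Qed.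

(* Since preimage n = c1 n + d1 + O(1), [preimage n <= r] holds roughly for
   [n <= approx_index r], and only for [n < index_cap r]. *)
Definition approx_index (r : nat) : nat := nfloor ((INR r - d1) / c1).
Definition index_cap (r : nat) : nat := (nfloor ((INR r + Rabs d1 + 1) / c1) + 1)%nat.

Lemma approx_index_bound r : Rabs (INR (approx_index r) - / c1 * INR r) <= 1 + 2 * (Rabs d1 / c1).
Proof.
  pose proof c1_pos as Hc. unfold approx_index.
  set (x := (INR r - d1) / c1).
  pose proof (nfloor_le x). pose proof (nfloor_gt x). pose proof (pos_INR (nfloor x)).
  assert (Ex : / c1 * INR r = x + d1 / c1) by (unfold x; field; lra).
  rewrite Ex.
  assert (Hd : Rabs d1 / c1 >= d1 / c1 /\ Rabs d1 / c1 >= - (d1 / c1)).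
  { split; unfold Rdiv; apply Rle_ge.
    - apply Rmult_le_compat_r; [left; apply Rinv_0_lt_compat; auto|apply Rle_abs].
    - replace (- (d1 * / c1)) with ((- d1) * / c1) by ring.
      apply Rmult_le_compat_r; [left; apply Rinv_0_lt_compat; auto|].
      rewrite <- Rabs_Ropp. apply Rle_abs. }
  unfold Rmax in H. destruct (Rle_dec x 0) as [h|h].
  - assert (INR r >= 0) by (apply Rle_ge, pos_INR).
    assert (- x <= Rabs d1 / c1).
    { unfold x. replace (- ((INR r - d1) / c1)) with (d1 / c1 - INR r / c1) by (field; lra).
      assert (0 <= INR r / c1) by (apply Rmult_le_pos; [lra|left; apply Rinv_0_lt_compat; auto]). lra. }
    apply Rabs_le; split; lra.
  - apply Rabs_le; split; lra.
Qed.

Lemma approx_index_lt_cap r : (approx_index r < index_cap r)%nat.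
Proof.
  pose proof c1_pos as Hc. unfold approx_index, index_cap.
  set (x := (INR r - d1) / c1). set (y := (INR r + Rabs d1 + 1) / c1).
  assert (Hy : 0 <= y).
  { apply Rmult_le_pos; [pose proof (pos_INR r); pose proof (Rabs_pos d1); lra|left; apply Rinv_0_lt_compat; auto]. }
  assert (Hxy : Rmax x 0 <= y).
  { unfold Rmax. destruct (Rle_dec x 0); [lra|].
    unfold x, y, Rdiv. apply Rmult_le_compat_r; [left; apply Rinv_0_lt_compat; auto|].
    pose proof (Rle_abs (- d1)). rewrite Rabs_Ropp in H. lra. }
  pose proof (nfloor_le x). pose proof (nfloor_gt y).
  assert (INR (nfloor x) < INR (nfloor y + 1)) by (rewrite plus_INR; simpl; lra).
  apply INR_lt in H1. auto.
Qed.

Section Tail.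
Variables (N0 : nat) (Z0 : R) (kA : nat).
Hypotheses (HN01 : (1 <= N0)%nat)
  (HN0 : forall n, (N0 <= n)%nat ->
     R0' <= preimage n /\ peval Q1 (preimage n) = peval P (INR n) /\
     Rabs (preimage n - c1 * INR n - d1) < 1 /\
     (forall n', (N0 <= n')%nat -> preimage n = preimage n' -> n = n'))
  (HZ0R : R0' <= Z0)
  (HZ0 : forall z (n : nat), Z0 <= z -> peval Q1 z = peval P (INR n) -> (N0 <= n)%nat)
  (HkA : has_card (fun z => SS z /\ 1 <= z /\ z < Z0) kA).

Definition tail_index (r n : nat) : Prop :=
  (N0 <= n)%nat /\ G n /\ Z0 <= preimage n /\ preimage n <= INR r.

Lemma tail_index_lt_cap r n : (N0 <= n)%nat -> preimage n <= INR r -> (n < index_cap r)%nat.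
Proof.
  intros Hn Hr. pose proof c1_pos as Hc.
  destruct (HN0 n Hn) as [_ [_ [Hab _]]]. apply Rabs_def2 in Hab.
  assert (H : INR n <= (INR r + Rabs d1 + 1) / c1).
  { apply Rmult_le_reg_l with c1; auto.
    replace (c1 * ((INR r + Rabs d1 + 1) / c1)) with (INR r + Rabs d1 + 1) by (field; lra).
    pose proof (Rle_abs (- d1)). rewrite Rabs_Ropp in H. lra. }
  apply INR_le_nfloor in H; [unfold index_cap; lia|].
  apply Rmult_le_pos; [pose proof (pos_INR r); pose proof (Rabs_pos d1); lra|left; apply Rinv_0_lt_compat; auto].
Qed.

Lemma has_card_split r : Z0 <= INR r ->
  has_card (fun z => SS z /\ 1 <= z <= INR r) (kA + ccount (tail_index r) (seq 0 (index_cap r))).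
Proof.
  intros Hr. destruct HkA as [LA [NLA [LLA HLA]]]. destruct R0'_ge as [HR0a HR0b].
  set (Fl := filter (fun n => decb (tail_index r n)) (seq 0 (index_cap r))).
  assert (HFl : forall n, In n Fl <-> In n (seq 0 (index_cap r)) /\ tail_index r n).
  { intros n. unfold Fl. rewrite filter_In. unfold decb.
    destruct (excluded_middle_informative (tail_index r n)); intuition congruence. }
  exists (LA ++ map preimage Fl). split; [|split].
  - apply NoDup_app; auto.
    + apply NoDup_map_inj_on; [apply NoDup_filter, seq_NoDup|].
      intros n n' Hn Hn' E. apply HFl in Hn. apply HFl in Hn'.
      destruct (HN0 n (proj1 (proj2 Hn))) as [_ [_ [_ Hi]]]. apply Hi; auto. apply Hn'.
    + intros z Hz1 Hz2. apply HLA in Hz1. apply in_map_iff in Hz2. destruct Hz2 as [n [<- Hn]].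
      apply HFl in Hn. unfold tail_index in Hn. lra.
  - rewrite length_app, length_map, LLA. f_equal. rewrite ccount_length_filter. reflexivity.
  - intros z. rewrite in_app_iff, in_map_iff. split.
    + intros [Hz|[n [<- Hn]]].
      * apply HLA in Hz. destruct Hz as [Sz [H1 H2]]. split; auto; lra.
      * apply HFl in Hn. destruct Hn as [_ [HnN [Gn [H1 H2]]]].
        destruct (HN0 n HnN) as [Z1 [Z2 _]]. split; [|split; lra].
        apply HS. split; [lra|]. exists n. split; [lia|]. auto.
    + intros [Sz [H1 H2]]. destruct (Rlt_or_le z Z0) as [h|h].
      * left. apply HLA. auto.
      * right. pose proof Sz as Sz'. apply HS in Sz'. destruct Sz' as [HzR [n [Hn1 [E Gn]]]].
        pose proof (HZ0 z n h E) as HnN.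
        assert (Ez : preimage n = z) by (apply preimage_eq; auto; lra).
        exists n. split; auto. apply HFl. split.
        -- apply in_seq. split; [lia|]. apply tail_index_lt_cap; auto. lra.
        -- unfold tail_index. rewrite Ez. repeat split; auto; lra.
Qed.

Let K1 := Rmax (INR N0) ((Z0 - d1 + 1) / c1).

(* indices where the two counts may disagree: below the start of the tail, or near the
   cut-off (INR r - d1) / c1 *)
Definition exceptional (r n : nat) : Prop :=
  (-1 < INR n < -1 + (K1 + 2)) \/
  ((INR r - d1 - 1) / c1 < INR n < (INR r - d1 - 1) / c1 + 2 / c1).

Lemma exceptional_count_le r :
  INR (ccount (exceptional r) (seq 0 (index_cap r))) <= (K1 + 2 + 2) + (2 / c1 + 2).
Proof.
  pose proof c1_pos as Hc.
  assert (HK1 : 0 <= K1) by (pose proof (pos_INR N0); pose proof (Rmax_l (INR N0) ((Z0 - d1 + 1) / c1)); unfold K1; lra).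
  eapply Rle_trans; [apply le_INR, ccount_or_le|]. rewrite plus_INR.
  apply Rplus_le_compat.
  - apply ccount_window_le; [apply seq_NoDup|lra].
  - apply ccount_window_le; [apply seq_NoDup|]. apply Rmult_le_pos; [lra|left; apply Rinv_0_lt_compat; auto].
Qed.

Lemma cut_off_window r n : (INR r - d1 - 1) / c1 < INR n < (INR r - d1 + 1) / c1 -> exceptional r n.
Proof.
  intros H. right. replace ((INR r - d1 - 1) / c1 + 2 / c1) with ((INR r - d1 + 1) / c1); [lra|].
  pose proof c1_pos. field. lra.
Qed.

Lemma tail_index_cases r n :
  tail_index r n -> (G n /\ (1 <= n)%nat /\ (n <= approx_index r)%nat) \/ exceptional r n.
Proof.
  intros [HnN [Gn [H1 H2]]]. pose proof c1_pos as Hc.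
  destruct (le_lt_dec n (approx_index r)) as [h|h]; [left; repeat split; auto; lia|].
  right. apply cut_off_window.
  destruct (HN0 n HnN) as [_ [_ [Hab _]]]. apply Rabs_def2 in Hab.
  assert (INR n > (INR r - d1) / c1).
  { destruct (Rle_dec 0 ((INR r - d1) / c1)) as [h0|h0].
    - destruct (Rlt_or_le ((INR r - d1) / c1) (INR n)) as [h1|h1]; auto.
      apply INR_le_nfloor in h1; auto. unfold approx_index in h. lia.
    - pose proof (pos_INR n). lra. }
  split.
  - assert ((INR r - d1 - 1) / c1 < (INR r - d1) / c1).
    { unfold Rdiv. apply Rmult_lt_compat_r; [apply Rinv_0_lt_compat; auto|lra]. }
    lra.
  - apply Rmult_lt_reg_l with c1; auto.
    replace (c1 * ((INR r - d1 + 1) / c1)) with (INR r - d1 + 1) by (field; lra). lra.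
Qed.

Lemma counted_index_cases r n : G n -> (1 <= n)%nat -> (n <= approx_index r)%nat ->
  tail_index r n \/ exceptional r n.
Proof.
  intros Gn H1 H2. pose proof c1_pos as Hc.
  assert (Hx : INR n <= (INR r - d1) / c1).
  { apply le_INR in H2. pose proof (nfloor_le ((INR r - d1) / c1)).
    fold (approx_index r) in H. apply le_INR in H1. simpl in H1.
    unfold Rmax in H. destruct (Rle_dec ((INR r - d1) / c1) 0); lra. }
  pose proof (Rmax_l (INR N0) ((Z0 - d1 + 1) / c1)). pose proof (Rmax_r (INR N0) ((Z0 - d1 + 1) / c1)).
  fold K1 in H, H0.
  destruct (le_lt_dec N0 n) as [h|h].
  2:{ right. left. apply lt_INR in h. pose proof (pos_INR n). lra. }
  destruct (HN0 n h) as [_ [_ [Hab _]]]. apply Rabs_def2 in Hab.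
  destruct (Rlt_or_le (preimage n) Z0) as [h1|h1].
  - right. left. split; [pose proof (pos_INR n); lra|].
    assert (INR n < (Z0 - d1 + 1) / c1).
    { apply Rmult_lt_reg_l with c1; auto.
      replace (c1 * ((Z0 - d1 + 1) / c1)) with (Z0 - d1 + 1) by (field; lra). lra. }
    lra.
  - destruct (Rle_or_lt (preimage n) (INR r)) as [h2|h2]; [left; repeat split; auto|].
    right. apply cut_off_window. split.
    + apply Rmult_lt_reg_l with c1; auto.
      replace (c1 * ((INR r - d1 - 1) / c1)) with (INR r - d1 - 1) by (field; lra). lra.
    + assert ((INR r - d1) / c1 < (INR r - d1 + 1) / c1).
      { unfold Rdiv. apply Rmult_lt_compat_r; [apply Rinv_0_lt_compat; auto|lra]. }
      lra.
Qed.

Lemma tail_count_close r :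
  Rabs (INR (ccount (tail_index r) (seq 0 (index_cap r))) - INR (cnt G (approx_index r)))
  <= (K1 + 2 + 2) + (2 / c1 + 2).
Proof.
  rewrite <- (ccount_seq0_cnt G (approx_index r) (index_cap r) (approx_index_lt_cap r)).
  pose proof (ccount_le_or (tail_index r) _ (exceptional r) (seq 0 (index_cap r))
                (fun n _ H => tail_index_cases r n H)) as A1.
  pose proof (ccount_le_or _ (tail_index r) (exceptional r) (seq 0 (index_cap r))
                (fun n _ H => counted_index_cases r n (proj1 H) (proj1 (proj2 H)) (proj2 (proj2 H)))) as A2.
  apply le_INR in A1. apply le_INR in A2. rewrite plus_INR in A1, A2.
  pose proof (exceptional_count_le r). apply Rabs_le; split; lra.
Qed.

Lemma preimage_count_asymp (f : nat -> nat) :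
  (forall r, has_card (fun z => SS z /\ 1 <= z <= INR r) (f r)) ->
  asymp_linear (fun r => INR (f r)) (/ c1 * rho).
Proof.
  intros Hf. pose proof c1_pos as Hc.
  apply asymp_linear_eventually_bounded_diff with (y := fun r => INR (cnt G (approx_index r)))
    (R1 := (nfloor Z0 + 1)%nat) (B := INR kA + ((K1 + 2 + 2) + (2 / c1 + 2))).
  - intros r Hr.
    assert (HZr : Z0 <= INR r).
    { apply le_INR in Hr. rewrite plus_INR in Hr. simpl in Hr. pose proof (nfloor_gt Z0). lra. }
    rewrite (has_card_unique _ _ _ (Hf r) (has_card_split r HZr)), plus_INR.
    pose proof (tail_count_close r). pose proof (pos_INR kA).
    apply Rabs_le. apply Rabs_le_inv in H. split; lra.
  - apply (asymp_linear_comp (fun r => INR (cnt G r)) rho approx_index (/ c1) (1 + 2 * (Rabs d1 / c1))).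
    + left; apply Rinv_0_lt_compat; auto.
    + apply approx_index_bound.
    + apply HG.
Qed.

End Tail.

Lemma preimage_density : exists f : nat -> nat,
  (forall r, has_card (fun z => SS z /\ 1 <= z <= INR r) (f r)) /\
  Un_cv (fun r => INR (f r) / INR r) (/ c1 * rho).
Proof.
  destruct (choice (fun r k => has_card (fun z => SS z /\ 1 <= z <= INR r) k)) as [f Hf].
  { intros r. destruct (finite_below r) as [l [Nl Hl]]. exists (length l), l. auto. }
  exists f. split; auto.
  destruct preimage_eventually as [N0 [HN01 HN0]].
  destruct (preimage_index_large N0) as [Z0 [HZ0R HZ0]].
  destruct (finite_below (nfloor Z0 + 1)) as [l1 [_ Hl1]].
  destruct (has_card_exists (fun z => SS z /\ 1 <= z /\ z < Z0) l1) as [kA HkA].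
  { intros z [Sz [H1 H2]]. apply Hl1. repeat split; auto.
    pose proof (nfloor_gt Z0). rewrite plus_INR. simpl. lra. }
  apply asymp_linear_cv, (preimage_count_asymp N0 Z0 kA); auto.
Qed.

End PreimageCount.

Lemma cc_scale q m i j : cc q m i j = scale (q j) (q i) m.
Proof. reflexivity. Qed.

Lemma Rpower_inv x y : 0 < x -> Rpower (/ x) y = / Rpower x y.
Proof. intros Hx. unfold Rpower. rewrite ln_Rinv by auto. rewrite <- exp_Ropp. f_equal. ring. Qed.

Lemma cc_inv q m i j : 0 < lead q m i -> 0 < lead q m j -> cc q m i j = / cc q m j i.
Proof.
  intros Hi Hj. unfold cc. rewrite <- Rpower_inv by (apply Rdiv_lt_0_compat; auto).
  f_equal. field. split; lra.
Qed.

Lemma cc_pos q m i j : 0 < cc q m i j.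
Proof. unfold cc, Rpower. apply exp_pos. Qed.

Lemma mod_mod_divide n a L : (0 < a)%nat -> Nat.divide a L -> ((n mod L) mod a = n mod a)%nat.
Proof.
  intros Ha [k Hk]. subst L. pose proof (Nat.div_mod_eq n (k * a)) as E.
  set (q0 := (n / (k * a))%nat) in *. set (r0 := (n mod (k * a))%nat) in *.
  assert (E2 : n = (r0 + (k * q0) * a)%nat) by (rewrite E at 1; ring).
  rewrite E2. rewrite Nat.Div0.mod_add. reflexivity.
Qed.

Lemma rat_reduced (c : R) : is_rat c -> 0 < c ->
  exists al be : nat, (0 < al)%nat /\ (0 < be)%nat /\ Nat.gcd al be = 1%nat /\ c = INR be / INR al.
Proof.
  intros [p [r [Hr E]]] Hc.
  assert (Hp : p <> 0%Z) by (intros ->; rewrite E in Hc; unfold Rdiv in Hc; rewrite Rmult_0_l in Hc; lra).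
  set (p' := Z.abs_nat p). set (r' := Z.abs_nat r).
  assert (Hc' : c = INR p' / INR r').
  { unfold p', r'. rewrite !INR_IZR_INZ, !Nat2Z.inj_abs_nat. rewrite E in *.
    assert (IZR r <> 0) by (apply not_0_IZR; auto).
    destruct (Z_lt_le_dec 0 r) as [h|h]; destruct (Z_lt_le_dec 0 p) as [h'|h'].
    - rewrite !Z.abs_eq by lia. reflexivity.
    - exfalso. assert (IZR p < 0) by (apply IZR_lt; lia). assert (0 < IZR r) by (apply IZR_lt; lia).
      assert (IZR p / IZR r < 0) by (unfold Rdiv; apply Rmult_neg_pos; [lra|apply Rinv_0_lt_compat; lra]). lra.
    - exfalso. assert (0 < IZR p) by (apply IZR_lt; lia). assert (IZR r < 0) by (apply IZR_lt; lia).
      assert (IZR p / IZR r < 0) by (unfold Rdiv; apply Rmult_pos_neg; [lra|apply Rinv_lt_0_compat; lra]). lra.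
    - rewrite !Z.abs_neq by lia. rewrite !opp_IZR. field. auto. }
  assert (Hp' : (0 < p')%nat) by (unfold p'; lia). assert (Hr' : (0 < r')%nat) by (unfold r'; lia).
  set (g := Nat.gcd r' p').
  assert (Hg : g <> 0%nat) by (unfold g; intros H; apply Nat.gcd_eq_0 in H; lia).
  exists (r' / g)%nat, (p' / g)%nat.
  destruct (Nat.gcd_divide_l r' p') as [kr Hkr]. destruct (Nat.gcd_divide_r r' p') as [kp Hkp].
  fold g in Hkr, Hkp.
  assert (E1 : (r' / g = kr)%nat) by (rewrite Hkr; apply Nat.div_mul; auto).
  assert (E2 : (p' / g = kp)%nat) by (rewrite Hkp; apply Nat.div_mul; auto).
  split; [rewrite E1; nia|]. split; [rewrite E2; nia|]. split.
  - apply Nat.gcd_div_gcd; auto.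
  - rewrite E1, E2, Hc'. rewrite Hkr, Hkp, !mult_INR.
    assert (INR g <> 0) by (apply not_0_INR; auto).
    assert (INR kr <> 0) by (apply not_0_INR; nia). field. split; auto.
Qed.

Lemma rat_reduced_unique al be al' be' : (0 < al)%nat -> (0 < al')%nat ->
  Nat.gcd al be = 1%nat -> Nat.gcd al' be' = 1%nat ->
  INR be / INR al = INR be' / INR al' -> al = al' /\ be = be'.
Proof.
  intros H1 H2 G1 G2 E.
  assert (Ha : INR al <> 0) by (apply not_0_INR; lia). assert (Ha' : INR al' <> 0) by (apply not_0_INR; lia).
  assert (E' : (be * al' = be' * al)%nat).
  { apply INR_eq. rewrite !mult_INR. apply (f_equal (fun x => x * INR al * INR al')) in E.
    field_simplify in E; auto. lra. }
  assert (D1 : Nat.divide al al').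
  { apply Nat.gauss with be; auto. exists be'. lia. }
  assert (D2 : Nat.divide al' al).
  { apply Nat.gauss with be'; auto. exists be. lia. }
  assert (al = al') by (apply Nat.divide_antisym; auto). subst. split; auto. nia.
Qed.

Lemma T_in t i : (1 <= i <= length t)%nat -> In (T t i) t.
Proof. intros H. unfold T. apply nth_In. lia. Qed.

Lemma T_range k t i : valid_tuple k t -> (1 <= i <= length t)%nat -> (1 <= T t i <= k)%nat.
Proof. intros [_ [_ H]] Hi. apply H. apply T_in; auto. Qed.

Lemma forall_T_iff t (Phi : nat -> Prop) :
  (forall j, (1 <= j <= length t)%nat -> Phi (T t j)) <-> (forall s, In s t -> Phi s).
Proof.
  split.
  - intros H s Hs. apply In_nth with (d := 0%nat) in Hs. destruct Hs as [n [Hn <-]].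
    replace (nth n t 0%nat) with (T t (S n)) by (unfold T; f_equal; lia). apply H. lia.
  - intros H j Hj. apply H, T_in; auto.
Qed.

Lemma lcm_list_map_ext u al al' : (forall i, (2 <= i <= u)%nat -> al i = al' i) ->
  lcm_list (map al (idx2 u)) = lcm_list (map al' (idx2 u)).
Proof.
  intros H. f_equal. apply map_ext_in. intros i Hi. apply H. unfold idx2 in Hi. apply in_seq in Hi. lia.
Qed.

Lemma Mformula_ext u al be x al' be' x' :
  (forall i, (2 <= i <= u)%nat -> al i = al' i /\ be i = be' i /\ x i = x' i) ->
  Mformula u al be x = Mformula u al' be' x'.
Proof.
  intros H. unfold Mformula.
  assert (Em : map al (idx2 u) = map al' (idx2 u)).
  { apply map_ext_in. intros i Hi. apply H. unfold idx2 in Hi. apply in_seq in Hi. lia. }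
  rewrite Em. apply ccount_ext. intros ws _. split.
  - intros [HW HV]. split.
    + intros i Hi. destruct (H i Hi) as [Ea [Eb Ex]]. rewrite <- Ea, <- Eb, <- Ex. auto.
    + intros i j Hi Hj. destruct (H i Hi) as [Ei _]. destruct (H j Hj) as [Ej _].
      rewrite <- Ei, <- Ej. apply HV; auto.
  - intros [HW HV]. split.
    + intros i Hi. destruct (H i Hi) as [Ea [Eb Ex]]. rewrite Ea, Eb, Ex. auto.
    + intros i j Hi Hj. destruct (H i Hi) as [Ei _]. destruct (H j Hj) as [Ej _].
      rewrite Ei, Ej. apply HV; auto.
Qed.

Lemma eventually_forall_range (Phi : nat -> nat -> Prop) a b :
  (forall i, (a <= i <= b)%nat -> exists N, forall n, (N <= n)%nat -> Phi i n) ->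
  exists N, forall n, (N <= n)%nat -> forall i, (a <= i <= b)%nat -> Phi i n.
Proof.
  induction b; intros H.
  - destruct (le_lt_dec a 0) as [h|h].
    + destruct (H 0%nat ltac:(lia)) as [N HN]. exists N. intros n Hn i Hi. replace i with 0%nat by lia. auto.
    + exists 0%nat. intros n _ i Hi. lia.
  - destruct IHb as [N1 HN1]; [intros; apply H; lia|].
    destruct (le_lt_dec a (S b)) as [h|h].
    + destruct (H (S b) ltac:(lia)) as [N2 HN2]. exists (N1 + N2)%nat. intros n Hn i Hi.
      destruct (Nat.eq_dec i (S b)) as [->|E]; [apply HN2; lia|apply HN1; lia].
    + exists N1. intros n Hn i Hi. lia.
Qed.

Lemma seq_sorted a n : StronglySorted lt (seq a n).
Proof.
  revert a; induction n; intros a; simpl; constructor; auto.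
  apply Forall_forall. intros x Hx. apply in_seq in Hx. lia.
Qed.

Lemma subseqs_sorted l t : StronglySorted lt l -> In t (subseqs l) ->
  StronglySorted lt t /\ (forall x, In x t -> In x l).
Proof.
  revert t; induction l as [|a l IH]; intros t Hs Ht; simpl in Ht.
  - destruct Ht as [<-|[]]. split; [constructor|simpl; tauto].
  - inversion Hs; subst. apply in_app_or in Ht. destruct Ht as [Ht|Ht].
    + apply in_map_iff in Ht. destruct Ht as [t' [<- Ht']].
      destruct (IH t' H1 Ht') as [S1 S2]. split.
      * constructor; auto. apply Forall_forall. intros x Hx. rewrite Forall_forall in H2. apply H2, S2; auto.
      * intros x [E|E]; [left; auto|right; auto].
    + destruct (IH t H1 Ht) as [S1 S2]. split; auto. intros x Hx; right; auto.
Qed.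

Lemma StronglySorted_nth t : StronglySorted lt t -> forall j, (S j < length t)%nat -> (nth j t 0 < nth (S j) t 0)%nat.
Proof.
  induction t as [|a t IH]; intros Hs j Hj; simpl in Hj; [lia|].
  inversion Hs; subst. destruct j.
  - destruct t as [|b t']; simpl in Hj; [lia|]. simpl. rewrite Forall_forall in H2. apply H2. left; auto.
  - simpl. apply IH; auto. lia.
Qed.

Lemma valid_nonempty_subseqs k t : In t (nonempty_subseqs (seq 1 k)) -> valid_tuple k t.
Proof.
  intros H. unfold nonempty_subseqs in H. apply filter_In in H. destruct H as [H Hne].
  destruct (subseqs_sorted _ _ (seq_sorted 1 k) H) as [S1 S2].
  split; [destruct t; [discriminate|congruence]|]. split.
  - apply StronglySorted_nth; auto.
  - intros s Hs. apply S2 in Hs. apply in_seq in Hs. lia.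
Qed.

Lemma Rsum_app l1 l2 : Rsum_list (l1 ++ l2) = Rsum_list l1 + Rsum_list l2.
Proof. induction l1; simpl; [ring|rewrite IHl1; ring]. Qed.

Lemma Rsum_scal {A} (f : A -> R) a l : Rsum_list (map (fun x => a * f x) l) = a * Rsum_list (map f l).
Proof. induction l; simpl; [ring|rewrite IHl; ring]. Qed.

Lemma Rsum_plus {A} (f g : A -> R) l : Rsum_list (map (fun x => f x + g x) l) = Rsum_list (map f l) + Rsum_list (map g l).
Proof. induction l; simpl; [ring|rewrite IHl; ring]. Qed.

Lemma Rsum_ext {A} (f g : A -> R) l : (forall x, In x l -> f x = g x) -> Rsum_list (map f l) = Rsum_list (map g l).
Proof. intros H; f_equal; apply map_ext_in; auto. Qed.

Lemma Rsum_swap {A B} (a : A -> R) (h : A -> B -> R) (l1 : list A) (l2 : list B) :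
  Rsum_list (map (fun t => a t * Rsum_list (map (fun z => h t z) l2)) l1) =
  Rsum_list (map (fun z => Rsum_list (map (fun t => a t * h t z) l1)) l2).
Proof.
  induction l1 as [|t l1 IH]; simpl.
  - clear. induction l2; simpl; [ring|rewrite <- IHl2; ring].
  - rewrite IH. rewrite <- Rsum_scal. rewrite <- Rsum_plus. reflexivity.
Qed.

Lemma INR_ccount {A} (P : A -> Prop) l : INR (ccount P l) = Rsum_list (map (fun z => INR (dec01 (P z))) l).
Proof. induction l; simpl; [reflexivity|rewrite plus_INR, IHl; reflexivity]. Qed.

Lemma dec01_and (P Q : Prop) : INR (dec01 (P /\ Q)) = INR (dec01 P) * INR (dec01 Q).
Proof.
  unfold dec01. destruct (excluded_middle_informative (P /\ Q)); destruct (excluded_middle_informative P);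
  destruct (excluded_middle_informative Q); simpl; try ring; tauto.
Qed.

Section IE.
Variables (A : nat -> R -> Prop) (z : R).
Definition ind s := INR (dec01 (A s z)).
Definition ind_all (t : list nat) := INR (dec01 (forall s, In s t -> A s z)).

Lemma ind_all_nil : ind_all nil = 1.
Proof. unfold ind_all. rewrite dec01_true; [reflexivity|simpl; tauto]. Qed.

Lemma ind_all_cons x t : ind_all (x :: t) = ind x * ind_all t.
Proof.
  unfold ind_all, ind. rewrite <- dec01_and. f_equal. apply dec01_iff. simpl. firstorder congruence.
Qed.

Lemma sum_subseqs_signed l : Rsum_list (map (fun t => (-1) ^ (length t) * ind_all t) (subseqs l)) =
  fold_right (fun s acc => (1 - ind s) * acc) 1 l.
Proof.
  induction l as [|x l IH]; simpl.
  - rewrite ind_all_nil. ring.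
  - rewrite map_app, Rsum_app, map_map. rewrite IH.
    rewrite (Rsum_ext _ (fun t => - ind x * ((-1) ^ length t * ind_all t))).
    + rewrite Rsum_scal, IH. ring.
    + intros t _. simpl. rewrite ind_all_cons. ring.
Qed.

Lemma sum_subseqs_nil (g : list nat -> R) l : Rsum_list (map g (subseqs l)) = g nil + Rsum_list (map g (nonempty_subseqs l)).
Proof.
  unfold nonempty_subseqs. induction l as [|x l IH]; simpl.
  - ring.
  - rewrite filter_app, !map_app, !Rsum_app, IH.
    assert (E : filter (fun t => match t with nil => false | _ => true end) (map (cons x) (subseqs l)) = map (cons x) (subseqs l)).
    { clear. induction (subseqs l); simpl; auto. rewrite IHl0. reflexivity. }
    rewrite E. ring.
Qed.

Lemma prod_one_sub_ind l : (exists s, In s l /\ A s z) -> fold_right (fun s acc => (1 - ind s) * acc) 1 l = 0.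
Proof.
  induction l as [|x l IH]; intros [s [Hs As]]; simpl in *; [tauto|].
  destruct Hs as [<-|Hs].
  - unfold ind. rewrite dec01_true by auto. simpl. ring.
  - rewrite IH; [ring|exists s; auto].
Qed.

Lemma inclusion_exclusion_point l : (exists s, In s l /\ A s z) ->
  Rsum_list (map (fun t => (-1) ^ (S (length t)) * ind_all t) (nonempty_subseqs l)) = 1.
Proof.
  intros H.
  pose proof (sum_subseqs_nil (fun t => (-1) ^ (length t) * ind_all t) l) as E2.
  rewrite sum_subseqs_signed, prod_one_sub_ind in E2 by auto. simpl in E2. rewrite ind_all_nil in E2.
  rewrite (Rsum_ext _ (fun t => -1 * ((-1) ^ length t * ind_all t))) by (intros; simpl; ring).
  rewrite Rsum_scal. lra.
Qed.
End IE.

Lemma has_card_ccount (S : R -> Prop) n L : has_card S n -> NoDup L -> (forall z, S z -> In z L) -> n = ccount S L.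
Proof.
  intros Hn NL HL. apply (has_card_unique S); auto.
  exists (filter (fun z => decb (S z)) L). split; [apply NoDup_filter; auto|]. split.
  - rewrite ccount_length_filter. reflexivity.
  - intros z. rewrite filter_In. unfold decb. destruct (excluded_middle_informative (S z)); split; intros H.
    + auto.
    + split; auto.
    + destruct H; discriminate.
    + contradiction.
Qed.

Lemma asymp_linear_0 : asymp_linear (fun _ => 0) 0.
Proof. intros eps Heps. exists 0. intros r. replace (0 - 0 * INR r) with 0 by ring. rewrite Rabs_R0.
  pose proof (pos_INR r). assert (0 <= eps * INR r) by (apply Rmult_le_pos; lra). lra. Qed.

Lemma asymp_linear_sum {A} (a : A -> R) (y : A -> nat -> R) (L : A -> R) l :
  (forall t, In t l -> asymp_linear (y t) (L t)) ->
  asymp_linear (fun r => Rsum_list (map (fun t => a t * y t r) l)) (Rsum_list (map (fun t => a t * L t) l)).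
Proof.
  induction l as [|t l IH]; intros H; simpl.
  - apply asymp_linear_0.
  - apply asymp_linear_plus; [apply asymp_linear_scal, H; left; auto|apply IH; intros; apply H; right; auto].
Qed.

Section Main.
Variables (k m : nat) (q : nat -> list R).
Hypotheses (Hm : (1 <= m)%nat)
  (Hdeg : forall i, (1 <= i <= k)%nat -> has_degree (q i) m)
  (Hinf : forall i, (1 <= i <= k)%nat -> tends_to_infty (peval (q i))).

Lemma lead_q_pos i : (1 <= i <= k)%nat -> 0 < nth m (q i) 0.
Proof. intros H. apply (lead_coef_pos (q i) m (Hdeg i H) Hm (Hinf i H)). Qed.

Definition shift_datum (t : list nat) (i al be : nat) (x : R) : Prop :=
  (0 < al)%nat /\ (0 < be)%nat /\ Nat.gcd al be = 1%nat /\
  cc q m (T t i) (T t 1) = INR be / INR al /\ is_rat x /\ shift_id q m t i x.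

Definition shift_data (t : list nat) (al be : nat -> nat) (x : nat -> R) : Prop :=
  forall i, (2 <= i <= length t)%nat -> shift_datum t i (al i) (be i) (x i).

Definition shift_case t := exists al be x, shift_data t al be x.

Definition wit (t : list nat) : (nat -> nat) * (nat -> nat) * (nat -> R) :=
  epsilon (inhabits (fun _ => 0%nat, fun _ => 0%nat, fun _ => 0))
    (fun w => shift_data t (fst (fst w)) (snd (fst w)) (snd w)).
Definition wit_al t := fst (fst (wit t)).
Definition wit_be t := snd (fst (wit t)).
Definition wit_x t := snd (wit t).

Lemma wit_spec t : shift_case t -> shift_data t (wit_al t) (wit_be t) (wit_x t).
Proof.
  intros [al [be [x H]]]. unfold wit_al, wit_be, wit_x, wit.
  apply (epsilon_spec (inhabits (fun _ => 0%nat, fun _ => 0%nat, fun _ => 0))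
    (fun w => shift_data t (fst (fst w)) (snd (fst w)) (snd w))).
  exists (al, be, x). exact H.
Qed.

(* The M(t) and a(t) of the theorem.  In case (1) they are computed from one chosen
   family of data; [a_M_shift_case] shows that the data are unique. *)
Definition a_of (t : list nat) : nat :=
  if Nat.leb (length t) 1 then 1%nat
  else if excluded_middle_informative (shift_case t)
       then lcm_list (map (wit_al t) (idx2 (length t))) else 1%nat.

Definition M_of (t : list nat) : nat :=
  if Nat.leb (length t) 1 then 1%nat
  else if excluded_middle_informative (shift_case t)
       then Mformula (length t) (wit_al t) (wit_be t) (wit_x t) else 0%nat.

Section Tuple.
Variable t : list nat.
Hypothesis Ht : valid_tuple k t.
Let u := length t.
Let t1 := T t 1.

Lemma length_pos : (1 <= u)%nat.
Proof. destruct Ht as [Hne _]. unfold u. destruct t; [contradiction|simpl; lia]. Qed.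

Lemma T_bounds i : (1 <= i <= u)%nat -> (1 <= T t i <= k)%nat.
Proof. intros H. apply T_range; auto. Qed.

Lemma T1_bounds : (1 <= t1 <= k)%nat.
Proof. apply T_bounds. pose proof length_pos. lia. Qed.

Lemma shift_id_iff i e : (1 <= i <= u)%nat ->
  (shift_id q m t i e <-> forall z, peval (q (T t i)) (scale (q t1) (q (T t i)) m * z + e) = peval (q t1) z).
Proof.
  intros Hi. unfold shift_id. fold t1.
  assert (Hinv : cc q m t1 (T t i) = / scale (q t1) (q (T t i)) m).
  { rewrite <- cc_scale. apply cc_inv; [apply lead_q_pos, T1_bounds|apply lead_q_pos, T_bounds; auto]. }
  pose proof (scale_pos (q t1) (q (T t i)) m) as Hc.
  rewrite Hinv. split.
  - intros H z. rewrite H. f_equal. field. lra.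
  - intros H y. rewrite <- H. f_equal. field. lra.
Qed.

Lemma good_iff_attained n : good q t n <-> forall i, (1 <= i <= u)%nat -> attained (q (T t i)) (q t1) n.
Proof. unfold good, attained. fold u t1. tauto. Qed.

Lemma attained_refl n : (1 <= n)%nat -> attained (q t1) (q t1) n.
Proof. intros H. exists n. split; auto. Qed.

Lemma density_single : u = 1%nat -> density (good q t) 1.
Proof.
  intros Hu. apply density_all. intros n Hn. apply good_iff_attained. intros i Hi.
  replace i with 1%nat by lia. apply attained_refl; auto.
Qed.

Lemma density_shift_case al be x : (1 < u)%nat -> shift_data t al be x ->
  density (good q t) (INR (Mformula u al be x) / INR (lcm_list (map al (idx2 u)))).
Proof.
  intros Hu H1.
  assert (Hal : forall i, (2 <= i <= u)%nat -> (0 < al i)%nat) by (intros i Hi; apply H1; auto).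
  assert (Hev : forall i, (2 <= i <= u)%nat -> exists N, forall n, (N <= n)%nat ->
             (attained (q (T t i)) (q t1) n <-> inW (al i) (be i) (x i) (n mod al i))).
  { intros i Hi. destruct (H1 i Hi) as [Ha [Hb [_ [Hc [_ Hs]]]]].
    pose proof (proj1 (shift_id_iff i (x i) ltac:(lia)) Hs) as Hs2. clear Hs. rename Hs2 into Hs.
    destruct (attained_iff_integer (q t1) (q (T t i)) m (Hdeg _ T1_bounds) Hm (lead_q_pos _ T1_bounds) (x i) Hs) as [N HN].
    exists N. intros n Hn. rewrite HN by auto.
    rewrite <- cc_scale. fold t1 in Hc. rewrite Hc. apply integer_iff_inW; auto. }
  destruct (eventually_forall_range _ 2 u Hev) as [N HN].
  set (L := period u al).
  assert (HL : L = lcm_list (map al (idx2 u))) by reflexivity.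
  rewrite <- HL, <- (Mformula_count u al be x Hal). fold L.
  apply (density_eventually_iff (fun n => residues_in_W u al be x (n mod L)) _ _ (N + 1)).
  - intros n Hn. rewrite good_iff_attained. split.
    + intros HP i Hi. destruct (Nat.eq_dec i 1) as [->|Hne].
      * apply attained_refl. lia.
      * apply (HN n ltac:(lia) i ltac:(lia)). specialize (HP i ltac:(lia)).
        unfold residues_in_W in HP. rewrite mod_mod_divide in HP; auto; [apply Hal; lia|apply divide_period; lia].
    + intros Hg i Hi. unfold residues_in_W. rewrite mod_mod_divide; [|apply Hal; lia|apply divide_period; lia].
      apply (HN n ltac:(lia) i Hi). apply Hg. lia.
  - apply (density_periodic (fun n => residues_in_W u al be x (n mod L)) (residues_in_W u al be x) L).
    + apply period_pos; auto.
    + intros n. tauto.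
Qed.

Definition bad_index (i : nat) : Prop :=
  ~ is_rat (cc q m (T t i) (T t 1)) \/
  (is_rat (cc q m (T t i) (T t 1)) /\ ~ (exists xi, is_rat xi /\ shift_id q m t i xi)).

Lemma bad_index_exists : (1 < u)%nat -> ~ shift_case t -> exists i, (2 <= i <= u)%nat /\ bad_index i.
Proof.
  intros Hu NP. apply NNPP. intros Hno. apply NP.
  assert (Hgood : forall i, exists w : nat * nat * R,
             (2 <= i <= u)%nat -> shift_datum t i (fst (fst w)) (snd (fst w)) (snd w)).
  { intros i. destruct (classic (2 <= i <= u)%nat) as [Hi|Hi]; [|exists (0%nat, 0%nat, 0); tauto].
    assert (Hnb : ~ bad_index i) by (intros Hb; apply Hno; exists i; auto).
    unfold bad_index in Hnb.
    assert (Hr : is_rat (cc q m (T t i) (T t 1))) by (apply NNPP; intros H; apply Hnb; left; auto).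
    assert (Hs : exists xi, is_rat xi /\ shift_id q m t i xi) by (apply NNPP; intros H; apply Hnb; right; auto).
    destruct Hs as [xi [Hxi Hsh]].
    destruct (rat_reduced _ Hr (cc_pos q m _ _)) as [al [be [Ha [Hb [Hg Hc]]]]].
    exists (al, be, xi). intros _. repeat split; auto. }
  destruct (choice _ Hgood) as [F HF].
  exists (fun i => fst (fst (F i))), (fun i => snd (fst (F i))), (fun i => snd (F i)).
  intros i Hi. apply HF. auto.
Qed.

Lemma density_bad_index i : (2 <= i <= u)%nat -> bad_index i -> density (good q t) 0.
Proof.
  intros Hi Hb.
  assert (Hti : (1 <= T t i <= k)%nat) by (apply T_bounds; lia).
  apply (density0_sub _ (attained (q (T t i)) (q t1))).
  { intros n Hg. apply good_iff_attained with (i := i) in Hg; auto. lia. }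
  unfold bad_index in Hb. fold t1 in Hb. rewrite !cc_scale in Hb. destruct Hb as [Hb|[Hr Hb]].
  - apply (density0_irrational_scale (q t1) (q (T t i)) m (Hdeg _ T1_bounds) (Hdeg _ Hti) Hm (lead_q_pos _ T1_bounds) (lead_q_pos _ Hti)).
    intros h Hh z Ez. apply Hb. exists z, (Z.of_nat h). split; [lia|].
    rewrite <- INR_IZR_INZ, <- Ez. field. apply not_0_INR. lia.
  - destruct (attained_finite_no_shift (q t1) (q (T t i)) m (Hdeg _ T1_bounds) (Hdeg _ Hti) Hm (lead_q_pos _ T1_bounds) (lead_q_pos _ Hti) Hr) as [N HN].
    + intros [e [He Hid]]. apply Hb. exists e. split; auto. apply (shift_id_iff i e ltac:(lia)). auto.
    + apply density0_spaced. intros H HH. exists N. intros n n' Hn _ _ Hs _. apply (HN n Hn Hs).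
Qed.

Lemma density_good : density (good q t) (INR (M_of t) / INR (a_of t)).
Proof.
  unfold M_of, a_of. fold u. destruct (Nat.leb_spec u 1) as [h|h].
  - replace (INR 1 / INR 1) with 1 by (simpl; field). apply density_single. pose proof length_pos. lia.
  - destruct (excluded_middle_informative (shift_case t)) as [HP|HP].
    + apply density_shift_case; auto. apply wit_spec; auto.
    + replace (INR 0 / INR 1) with 0 by (simpl; field).
      destruct (bad_index_exists h HP) as [i [Hi Hb]]. apply (density_bad_index i); auto.
Qed.

Lemma a_of_pos : (0 < a_of t)%nat.
Proof.
  unfold a_of. fold u. destruct (Nat.leb_spec u 1); [lia|].
  destruct (excluded_middle_informative (shift_case t)) as [HP|HP]; [|lia].
  apply lcm_list_pos. intros a Ha. apply in_map_iff in Ha. destruct Ha as [i [<- Hi]].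
  unfold idx2 in Hi. apply in_seq in Hi. apply (wit_spec t HP i). lia.
Qed.

Lemma M_of_le : (M_of t <= a_of t)%nat.
Proof.
  unfold M_of, a_of. fold u. destruct (Nat.leb_spec u 1); [lia|].
  destruct (excluded_middle_informative (shift_case t)) as [HP|HP]; [|lia].
  apply (Mformula_le u). intros i Hi. apply (wit_spec t HP i). auto.
Qed.

Lemma a_M_shift_case : (1 < u)%nat -> forall al be x, shift_data t al be x ->
  a_of t = lcm_list (map al (idx2 u)) /\ M_of t = Mformula u al be x.
Proof.
  intros Hu al be x H1.
  assert (HP : shift_case t) by (exists al, be, x; auto).
  pose proof (wit_spec t HP) as H2.
  assert (Heq : forall i, (2 <= i <= u)%nat -> wit_al t i = al i /\ wit_be t i = be i /\ wit_x t i = x i).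
  { intros i Hi. destruct (H1 i Hi) as [Ha [Hb [Hg [Hc [Hr Hs]]]]].
    destruct (H2 i Hi) as [Ha' [Hb' [Hg' [Hc' [Hr' Hs']]]]].
    destruct (rat_reduced_unique (wit_al t i) (wit_be t i) (al i) (be i)) as [E1 E2]; auto; [congruence|].
    split; auto. split; auto.
    pose proof (proj1 (shift_id_iff i _ ltac:(lia)) Hs) as Hs2. pose proof (proj1 (shift_id_iff i _ ltac:(lia)) Hs') as Hs3.
    assert (Hti : (1 <= T t i <= k)%nat) by (apply T_bounds; lia).
    rewrite (exact_shift_unique (q t1) (q (T t i)) m (Hdeg _ T1_bounds) (Hdeg _ Hti) Hm (lead_q_pos _ T1_bounds) (lead_q_pos _ Hti) _ Hs2).
    rewrite (exact_shift_unique (q t1) (q (T t i)) m (Hdeg _ T1_bounds) (Hdeg _ Hti) Hm (lead_q_pos _ T1_bounds) (lead_q_pos _ Hti) _ Hs3).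
    reflexivity. }
  unfold a_of, M_of. fold u. destruct (Nat.leb_spec u 1); [lia|].
  destruct (excluded_middle_informative (shift_case t)) as [_|NP]; [|contradiction].
  split.
  - apply lcm_list_map_ext. intros i Hi. apply Heq; auto.
  - apply Mformula_ext. auto.
Qed.

Lemma M_bad_index : (1 < u)%nat -> (exists i, (2 <= i <= u)%nat /\ bad_index i) -> M_of t = 0%nat.
Proof.
  intros Hu [i [Hi Hb]]. unfold M_of. fold u. destruct (Nat.leb_spec u 1); [lia|].
  destruct (excluded_middle_informative (shift_case t)) as [HP|HP]; auto.
  exfalso. destruct (wit_spec t HP i Hi) as [Ha [Hbe [Hg [Hc [Hr Hs]]]]].
  destruct Hb as [Hb|[_ Hb]].
  - apply Hb. rewrite Hc. exists (Z.of_nat (wit_be t i)), (Z.of_nat (wit_al t i)). split; [lia|].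
    rewrite <- !INR_IZR_INZ. reflexivity.
  - apply Hb. exists (wit_x t i). auto.
Qed.

Lemma preimage_density_tuple R0 : incr_from q k R0 ->
  exists f : nat -> nat,
    (forall r : nat, has_card (fun z => (forall j, (1 <= j <= u)%nat -> Aset q R0 (T t j) z) /\ 1 <= z <= INR r) (f r)) /\
    Un_cv (fun r => INR (f r) / INR r) (cc q m (T t 1) 1 * (INR (M_of t) / INR (a_of t))).
Proof.
  intros Hinc.
  assert (H1k : (1 <= 1 <= k)%nat) by (pose proof T1_bounds; lia).
  destruct (preimage_density (q t1) (q 1) m R0 (good q t) (INR (M_of t) / INR (a_of t))
              (fun z => forall j, (1 <= j <= u)%nat -> Aset q R0 (T t j) z)
              (Hdeg _ T1_bounds) (Hdeg _ H1k) Hm (lead_q_pos _ T1_bounds) (lead_q_pos _ H1k)) as [f [Hf1 Hf2]].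
  - intros x y Hx Hxy. apply (Hinc 1%nat H1k); auto.
  - apply density_good.
  - intros z. split.
    + intros H. destruct (H 1%nat ltac:(pose proof length_pos; lia)) as [HR0 [l [Hl E]]].
      split; auto. exists l. split; auto. split; [auto|].
      apply good_iff_attained. intros i Hi. destruct (H i Hi) as [_ [l' [Hl' E']]].
      exists l'. split; auto. fold t1 in E. congruence.
    + intros [HR0 [n [Hn [E Hg]]]] j Hj. apply good_iff_attained in Hg. destruct (Hg j Hj) as [l [Hl E']].
      split; auto. exists l. split; auto. unfold t1 in *. rewrite E, E'. reflexivity.
  - exists f. split; [exact Hf1|].
    assert (Ec : cc q m (T t 1) 1 = / scale (q t1) (q 1) m).
    { rewrite cc_inv; [rewrite cc_scale; reflexivity| |]; apply lead_q_pos; [apply T1_bounds|lia]. }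
    rewrite Ec. exact Hf2.
Qed.

End Tuple.

Lemma valid_single s : (1 <= s <= k)%nat -> valid_tuple k [s].
Proof.
  intros H. split; [discriminate|]. split.
  - intros j Hj. simpl in Hj. lia.
  - intros x [<-|[]]; auto.
Qed.

Lemma Rsum_ones {A} (l : list A) : Rsum_list (map (fun _ => 1) l) = INR (length l).
Proof. induction l; simpl; [reflexivity|rewrite IHl; destruct (length l); simpl; ring]. Qed.

Section Union.
Hypothesis Hk : (1 <= k)%nat.
Variable R0 : R.
Hypothesis Hinc : incr_from q k R0.

Definition inter_set (t : list nat) (r : nat) (z : R) : Prop :=
  (forall j, (1 <= j <= length t)%nat -> Aset q R0 (T t j) z) /\ 1 <= z <= INR r.

Definition union_set (r : nat) (z : R) : Prop :=
  (exists i, (1 <= i <= k)%nat /\ Aset q R0 i z) /\ 1 <= z <= INR r.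

Definition inter_limit (t : list nat) : R := cc q m (T t 1) 1 * (INR (M_of t) / INR (a_of t)).

Lemma union_prefix_finite k' r : (k' <= k)%nat -> exists L, forall z,
  ((exists i, (1 <= i <= k')%nat /\ Aset q R0 i z) /\ 1 <= z <= INR r) -> In z L.
Proof.
  induction k' as [|k' IH]; intros Hk'.
  - exists nil. intros z [[i [Hi _]] _]. lia.
  - destruct (IH ltac:(lia)) as [L1 HL1].
    destruct (preimage_density_tuple [S k'] (valid_single (S k') ltac:(lia)) R0 Hinc) as [f [Hf _]].
    destruct (Hf r) as [L2 [_ [_ HL2]]].
    exists (L1 ++ L2). intros z [[i [Hi Ai]] Hz]. apply in_or_app.
    destruct (Nat.eq_dec i (S k')) as [->|Ne].
    + right. apply HL2. split; auto. intros j Hj. simpl in Hj. replace j with 1%nat by lia. exact Ai.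
    + left. apply HL1. split; auto. exists i. split; auto. lia.
Qed.

Lemma inter_counts : exists F : list nat -> nat -> nat,
  forall t, In t (nonempty_subseqs (seq 1 k)) ->
    (forall r, has_card (inter_set t r) (F t r)) /\
    Un_cv (fun r => INR (F t r) / INR r) (inter_limit t).
Proof.
  apply (choice (fun t f => In t (nonempty_subseqs (seq 1 k)) ->
    (forall r, has_card (inter_set t r) (f r)) /\ Un_cv (fun r => INR (f r) / INR r) (inter_limit t))).
  intros t. destruct (classic (In t (nonempty_subseqs (seq 1 k)))) as [Ht|Ht].
  - destruct (preimage_density_tuple t (valid_nonempty_subseqs k t Ht) R0 Hinc) as [f Hf].
    exists f. auto.
  - exists (fun _ => 0%nat). tauto.
Qed.

Lemma union_card_incl_excl (F : list nat -> nat -> nat) (fU : nat -> nat) :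
  (forall t, In t (nonempty_subseqs (seq 1 k)) -> forall r, has_card (inter_set t r) (F t r)) ->
  (forall r, has_card (union_set r) (fU r)) ->
  forall r, INR (fU r) =
    Rsum_list (map (fun t => (-1) ^ (S (length t)) * INR (F t r)) (nonempty_subseqs (seq 1 k))).
Proof.
  intros HF HfU r. destruct (HfU r) as [LU [NLU [LLU HLU]]].
  set (ind_z := fun z t => ind_all (fun s z => Aset q R0 s z) z t).
  assert (E1 : forall t, In t (nonempty_subseqs (seq 1 k)) ->
             INR (F t r) = Rsum_list (map (fun z => ind_z z t) LU)).
  { intros t Ht. rewrite (has_card_ccount (inter_set t r) (F t r) LU); auto.
    - rewrite INR_ccount. apply Rsum_ext. intros z Hz. apply HLU in Hz. destruct Hz as [_ Hz].
      unfold ind_z, ind_all. f_equal. apply dec01_iff. unfold inter_set.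
      pose proof (forall_T_iff t (fun s => Aset q R0 s z)) as FT. cbv beta in FT. tauto.
    - intros z [Hz1 Hz2]. apply HLU. split; auto.
      destruct (valid_nonempty_subseqs k t Ht) as [Hne Hv].
      assert (H1 : (1 <= 1 <= length t)%nat) by (destruct t; [contradiction|simpl; lia]).
      exists (T t 1). split; [apply T_range; auto; split; auto|apply Hz1; auto]. }
  rewrite (Rsum_ext _ (fun t => (-1) ^ (S (length t)) * Rsum_list (map (fun z => ind_z z t) LU)))
    by (intros t Ht; rewrite E1; auto).
  rewrite (Rsum_swap (fun t => (-1) ^ (S (length t))) (fun t z => ind_z z t)).
  rewrite (Rsum_ext _ (fun _ => 1)).
  - rewrite Rsum_ones, LLU. reflexivity.
  - intros z Hz. apply HLU in Hz. destruct Hz as [[i [Hi Ai]] _].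
    apply (inclusion_exclusion_point (fun s z => Aset q R0 s z) z (seq 1 k)).
    exists i. split; auto. apply in_seq. lia.
Qed.

(* Every integer l > max(R0, 1) lies in A_1, since q_1(l) = q_1(l). *)
Lemma union_card_ge r n : has_card (union_set r) n ->
  INR r - INR (nfloor (Rmax R0 1) + 1) <= INR n.
Proof.
  intros [LU [NLU [LLU HLU]]]. set (a0 := (nfloor (Rmax R0 1) + 1)%nat).
  assert (Hle : (length (map INR (seq a0 (r + 1 - a0))) <= length LU)%nat).
  { apply NoDup_incl_length.
    - apply NoDup_map_inj_on; [apply seq_NoDup|]. intros x y _ _ E. apply INR_eq; auto.
    - intros z Hz. apply in_map_iff in Hz. destruct Hz as [l [<- Hl]]. apply in_seq in Hl.
      pose proof (nfloor_gt (Rmax R0 1)) as Hg.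
      assert (Ha0 : Rmax R0 1 < INR a0) by (unfold a0; rewrite plus_INR; simpl; lra).
      assert (Hla : INR a0 <= INR l) by (apply le_INR; lia).
      pose proof (Rmax_l R0 1). pose proof (Rmax_r R0 1).
      apply HLU. split.
      + exists 1%nat. split; [lia|]. split; [lra|]. exists l. split; [|reflexivity].
        apply INR_le. simpl. lra.
      + split; [lra|]. apply le_INR; lia. }
  rewrite length_map, length_seq, LLU in Hle.
  apply le_INR in Hle. destruct (le_lt_dec a0 r) as [h|h].
  - rewrite minus_INR in Hle by lia. rewrite plus_INR in Hle. simpl in Hle. lra.
  - apply lt_INR in h. pose proof (pos_INR n). lra.
Qed.

Lemma union_density :
  let c := Rsum_list (map (fun t => (-1) ^ (S (length t)) * (cc q m (T t 1) 1 * (INR (M_of t) / INR (a_of t))))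
                      (nonempty_subseqs (seq 1 k))) in
  (exists f : nat -> nat,
     (forall r : nat, has_card (fun z => (exists i, (1 <= i <= k)%nat /\ Aset q R0 i z) /\ 1 <= z <= INR r) (f r)) /\
     Un_cv (fun r => INR (f r) / INR r) c) /\ 1 <= c.
Proof.
  intros c.
  destruct inter_counts as [F HF].
  destruct (choice (fun r n => has_card (union_set r) n)) as [fU HfU].
  { intros r. destruct (union_prefix_finite k r (le_n _)) as [L HL]. apply (has_card_exists _ L). exact HL. }
  assert (Hcv : Un_cv (fun r => INR (fU r) / INR r) c).
  { apply asymp_linear_cv.
    apply asymp_linear_bounded_diff with (B := 0)
      (y := fun r => Rsum_list (map (fun t => (-1) ^ (S (length t)) * INR (F t r)) (nonempty_subseqs (seq 1 k)))).
    - intros r. rewrite (union_card_incl_excl F fU) by (auto; intros; apply HF; auto).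
      replace (_ - _) with 0 by ring. rewrite Rabs_R0. lra.
    - apply (asymp_linear_sum (fun t => (-1) ^ (S (length t))) (fun t r => INR (F t r)) inter_limit).
      intros t Ht. apply cv_asymp_linear. apply HF; auto. }
  split; [exists fU; split; auto|].
  apply (cv_ratio_ge_1 (fun r => INR (fU r)) (INR (nfloor (Rmax R0 1) + 1))); auto.
  intros r. apply union_card_ge, HfU.
Qed.

End Union.

End Main.

Theorem lemma4p1 (k m : nat) (q : nat -> list R)
  (Hk : (1 <= k)%nat) (Hm : (1 <= m)%nat)
  (Hdeg : forall i, (1 <= i <= k)%nat -> has_degree (q i) m)
  (Hinf : forall i, (1 <= i <= k)%nat -> tends_to_infty (peval (q i))) :
  exists M a : list nat -> nat,
    (forall t : list nat, valid_tuple k t ->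
       let u := length t in
       (0 < a t)%nat /\ (M t <= a t)%nat /\
       Un_cv (fun r => INR (cnt (good q t) r) / INR r) (INR (M t) / INR (a t)) /\
       (u = 1%nat -> M t = 1%nat /\ a t = 1%nat) /\
       (* (1) *)
       ((1 < u)%nat ->
        forall (al be : nat -> nat) (x : nat -> R),
          (forall i, (2 <= i <= u)%nat ->
             (0 < al i)%nat /\ (0 < be i)%nat /\ Nat.gcd (al i) (be i) = 1%nat /\
             cc q m (T t i) (T t 1) = INR (be i) / INR (al i) /\
             is_rat (x i) /\ shift_id q m t i (x i)) ->
          a t = lcm_list (map al (idx2 u)) /\ M t = Mformula u al be x) /\
       (* (2) *)
       ((1 < u)%nat ->
        (exists i, (2 <= i <= u)%nat /\
           (~ is_rat (cc q m (T t i) (T t 1)) \/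
            (is_rat (cc q m (T t i) (T t 1)) /\
             ~ (exists xi, is_rat xi /\ shift_id q m t i xi)))) ->
        M t = 0%nat) /\
       (* (3), first limit *)
       (forall R0 : R, incr_from q k R0 ->
          exists f : nat -> nat,
            (forall r : nat,
               has_card (fun z => (forall j, (1 <= j <= u)%nat -> Aset q R0 (T t j) z)
                                  /\ 1 <= z <= INR r) (f r)) /\
            Un_cv (fun r => INR (f r) / INR r)
                  (cc q m (T t 1) 1 * (INR (M t) / INR (a t))))) /\
    (* (3), second limit *)
    (forall R0 : R, incr_from q k R0 ->
       let c := Rsum_list
                  (map (fun t => (-1) ^ (S (length t)) *
                                 (cc q m (T t 1) 1 * (INR (M t) / INR (a t))))
                       (nonempty_subseqs (seq 1 k))) in
       (exists f : nat -> nat,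
          (forall r : nat,
             has_card (fun z => (exists i, (1 <= i <= k)%nat /\ Aset q R0 i z)
                                /\ 1 <= z <= INR r) (f r)) /\
          Un_cv (fun r => INR (f r) / INR r) c) /\
       1 <= c).
Proof.
  exists (M_of m q), (a_of m q). split.
  - intros t Ht u. split; [|split; [|split; [|split; [|split; [|split]]]]].
    + apply (a_of_pos m q Hm).
    + apply (M_of_le m q Hm).
    + apply asymp_linear_cv. apply (density_good k m q Hm Hdeg Hinf t Ht).
    + intros Hu. unfold M_of, a_of. fold u. rewrite Hu. simpl. auto.
    + intros Hu al be x H1. apply (a_M_shift_case k m q Hm Hdeg Hinf t Ht Hu al be x H1).
    + intros Hu Hb. apply (M_bad_index m q Hm t Hu Hb).
    + intros R0 HR0. apply (preimage_density_tuple k m q Hm Hdeg Hinf t Ht R0 HR0).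
  - intros R0 HR0. apply (union_density k m q Hm Hdeg Hinf Hk R0 HR0).
Qed.
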